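(* Let $\psi:[0,1]\to\mathbb{C}$ be a continuous function of bounded variation on $[0,1]$ with $\psi(0)=\psi(1)=0$ and $\psi(x)/x\in L_2(0,1)$. Let $$\hat\psi(t)=\int_0^1 e^{itx}\psi(x)\,dx,\qquad \Psi(t)=\int_0^1 e^{itx}\,d\psi(x).$$ Suppose that (i) $t^m\hat\psi^{(m)}(t)\in L_1(1,\infty)$ for $m=0,1,2$, and (ii) $t^m\hat\psi^{(m-1)}(t)=o(1)$ as $t\to\infty$ for $m=1,2$. Then $\Psi(t)=o(1)$ as $|t|\to\infty$, i.e. $\psi$ supports a Rajchman measure.
   Context: A function of bounded variation supports a Rajchman measure if the Fourier–Stieltjes transform of the associated measure tends to zero at infinity. *)

From Stdlib Require Import Reals.
From Coquelicot Require Import Coquelicot.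
Open Scope R_scope.

Definition cis (y : R) : C := (cos y, sin y).

Definition cont_on01 (psi : R -> C) : Prop :=
  forall x, 0 <= x <= 1 -> forall eps, 0 < eps -> exists delta, 0 < delta /\
    forall y, 0 <= y <= 1 -> Rabs (y - x) < delta -> Cmod (psi y - psi x) < eps.

Definition partition (a b : R) (p : nat -> R) (n : nat) : Prop :=
  p O = a /\ p n = b /\ forall k, (k < n)%nat -> p k <= p (S k).

Definition bounded_variation01 (psi : R -> C) : Prop :=
  exists M : R, forall p n, partition 0 1 p n ->
    sum_f_R0 (fun k => Cmod (psi (p (S k)) - psi (p k))) (pred n) <= M.

Fixpoint Csum (f : nat -> C) (n : nat) : C :=
  match n with O => RtoC 0 | S n' => Cplus (Csum f n') (f n') end.

Definition is_RS_integral (f g : R -> C) (a b : R) (I : C) : Prop :=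
  forall eps, 0 < eps -> exists delta, 0 < delta /\
    forall (p xi : nat -> R) (n : nat), (0 < n)%nat -> partition a b p n ->
      (forall k, (k < n)%nat -> p (S k) - p k < delta) ->
      (forall k, (k < n)%nat -> p k <= xi k <= p (S k)) ->
      Cmod (Csum (fun k => f (xi k) * (g (p (S k)) - g (p k)))%C n - I) < eps.

Definition hatpsi (psi : R -> C) (t : R) : C :=
  (RInt (fun x => Re (cis (t * x) * psi x)%C) 0 1,
   RInt (fun x => Im (cis (t * x) * psi x)%C) 0 1).

Definition Cderive (f : R -> C) (t : R) : C :=
  (Derive (fun s => Re (f s)) t, Derive (fun s => Im (f s)) t).

Fixpoint Cderive_n (m : nat) (f : R -> C) : R -> C :=
  match m with
  | O => f
  | S m' => Cderive (Cderive_n m' f)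
  end.

(* Integrating by parts, Psi(t) = -i t hatpsi(t), which tends to 0 as t -> +oo by (ii) with m = 1.
   The decay as t -> -oo is then a Rajchman-type argument.  Let V be the total variation of psi.
   A step function of modulus <= 1, equal on each cell of a nearly optimal partition to the
   phase of the increment of psi, is built from ramps in sin x; approximating |.| by a
   polynomial (an iteration converging to sqrt on [0,1]) turns it into a trigonometric polynomial
   phi with |phi| <= 1 and Re (int phi dpsi) >= V - e on all fine Riemann-Stieltjes sums.  For
   such phi, e^{-itx} dpsi is close to conj (phi^2 e^{itx} dpsi), and the latter only involves
   frequencies t + s with s bounded by the frequencies of phi^2, where Psi is already small. *)

From Stdlib Require Import Reals Lra Lia Psatz Classical.
From Stdlib Require List.
From Coquelicot Require Import Coquelicot.
Open Scope R_scope.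

(** * Finite sums and complex exponentials *)

Fixpoint rsum (f : nat -> R) (n : nat) : R :=
  match n with O => 0 | S n' => rsum f n' + f n' end.

Lemma rsum_ext f g n : (forall k, (k < n)%nat -> f k = g k) -> rsum f n = rsum g n.
Proof. induction n; simpl; intros H; auto. rewrite IHn, H; auto. Qed.

Lemma rsum_le f g n : (forall k, (k < n)%nat -> f k <= g k) -> rsum f n <= rsum g n.
Proof.
  induction n; simpl; intros H. lra.
  specialize (IHn (fun k Hk => H k (Nat.lt_lt_succ_r _ _ Hk))).
  specialize (H n (Nat.lt_succ_diag_r n)). lra.
Qed.

Lemma rsum_plus f g n : rsum (fun k => f k + g k) n = rsum f n + rsum g n.
Proof. induction n; simpl; lra. Qed.

Lemma rsum_minus f g n : rsum (fun k => f k - g k) n = rsum f n - rsum g n.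
Proof. induction n; simpl; lra. Qed.

Lemma rsum_scal c f n : rsum (fun k => c * f k) n = c * rsum f n.
Proof. induction n; simpl; try rewrite IHn; lra. Qed.

Lemma rsum_const c n : rsum (fun _ => c) n = INR n * c.
Proof. induction n. simpl. lra. simpl rsum. rewrite IHn, S_INR. lra. Qed.

Lemma rsum_nonneg f n : (forall k, (k < n)%nat -> 0 <= f k) -> 0 <= rsum f n.
Proof. intros H. rewrite <- (Rmult_0_r (INR n)), <- rsum_const. apply rsum_le; auto. Qed.

Lemma rsum_tele f n : rsum (fun k => f (S k) - f k) n = f n - f O.
Proof. induction n; simpl. lra. rewrite IHn. lra. Qed.

Lemma rsum_add f a b : rsum f (a + b) = rsum f a + rsum (fun k => f (a + k)%nat) b.
Proof.
  induction b. rewrite Nat.add_0_r. simpl. lra.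
  rewrite Nat.add_succ_r. simpl. rewrite IHb. lra.
Qed.

Lemma rsum_sum_f_R0 f n : (0 < n)%nat -> sum_f_R0 f (pred n) = rsum f n.
Proof. destruct n. lia. intros _. simpl. induction n; simpl. lra. rewrite IHn. simpl. lra. Qed.

Lemma rsum_div_mod (f : nat -> nat -> R) N n : (0 < n)%nat ->
  rsum (fun m => f (m / n)%nat (m mod n)%nat) (N * n) = rsum (fun b => rsum (f b) n) N.
Proof.
  intros Hn. induction N. simpl. auto.
  replace (S N * n)%nat with (N * n + n)%nat by lia.
  rewrite rsum_add, IHN. simpl. f_equal. apply rsum_ext. intros k Hk.
  replace (N * n + k)%nat with (k + N * n)%nat by lia.
  rewrite Nat.div_add, Nat.Div0.mod_add, Nat.div_small, Nat.mod_small; try lia. reflexivity.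
Qed.

Open Scope C_scope.

Lemma Csum_ext f g n : (forall k, (k < n)%nat -> f k = g k) -> Csum f n = Csum g n.
Proof. induction n; simpl; intros H; auto. rewrite IHn, H; auto. Qed.

Lemma Csum_plus f g n : Csum (fun k => f k + g k) n = Csum f n + Csum g n.
Proof. induction n; simpl. ring. rewrite IHn; ring. Qed.

Lemma Csum_minus f g n : Csum (fun k => f k - g k) n = Csum f n - Csum g n.
Proof. induction n; simpl. ring. rewrite IHn; ring. Qed.

Lemma Csum_scal c f n : Csum (fun k => c * f k) n = c * Csum f n.
Proof. induction n; simpl. ring. rewrite IHn; ring. Qed.

Lemma Csum_zero n : Csum (fun _ => 0) n = 0.
Proof. induction n; simpl; [auto | rewrite IHn; ring]. Qed.

Lemma Csum_tele f n : Csum (fun k => f (S k) - f k) n = f n - f O.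
Proof. induction n; simpl. ring. rewrite IHn. ring. Qed.

Lemma Csum_abel (a c : nat -> C) n :
  Csum (fun k => a k * (c (S k) - c k)) (S n)
  = a n * c (S n) - a O * c O - Csum (fun k => c (S k) * (a (S k) - a k)) n.
Proof. induction n; simpl in *. ring. rewrite IHn. ring. Qed.

Lemma Csum_indic (f : nat -> C) n k : (k < n)%nat ->
  Csum (fun b => if Nat.eq_dec b k then f b else 0) n = f k.
Proof.
  induction n; intros Hk. lia. simpl. destruct (Nat.eq_dec n k).
  - subst. rewrite (Csum_ext _ (fun _ => 0)), Csum_zero. ring.
    intros j Hj; destruct (Nat.eq_dec j k); lia || auto.
  - rewrite IHn by lia. ring.
Qed.

Lemma Csum_swap (f : nat -> nat -> C) n m :
  Csum (fun i => Csum (fun j => f i j) m) n = Csum (fun j => Csum (fun i => f i j) n) m.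
Proof.
  induction n; simpl. rewrite Csum_zero; auto.
  rewrite IHn, <- Csum_plus. reflexivity.
Qed.

Lemma Re_Csum f n : Re (Csum f n) = rsum (fun k => Re (f k)) n.
Proof. induction n; simpl; auto. rewrite <- IHn. reflexivity. Qed.

Lemma Cconj_Csum f n : Cconj (Csum f n) = Csum (fun k => Cconj (f k)) n.
Proof.
  induction n; simpl. unfold Cconj, RtoC; simpl; f_equal; lra.
  rewrite <- IHn. unfold Cconj, Cplus; simpl; f_equal; lra.
Qed.

Lemma Cmod_Csum f n : Cmod (Csum f n) <= rsum (fun k => Cmod (f k)) n.
Proof. induction n; simpl. rewrite Cmod_0; lra. eapply Rle_trans. apply Cmod_triangle. lra. Qed.

Lemma cis_add a b : cis a * cis b = cis (a + b).
Proof. unfold cis, Cmult; simpl. rewrite cos_plus, sin_plus. f_equal; lra. Qed.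

Lemma cis_conj a : Cconj (cis a) = cis (- a).
Proof. unfold cis, Cconj; simpl. rewrite cos_neg, sin_neg. auto. Qed.

Lemma Cmod_cis a : Cmod (cis a) = 1.
Proof.
  assert (E: (cos a ^ 2 + sin a ^ 2)%R = 1) by (pose proof (sin2_cos2 a) as H; unfold Rsqr in H; nra).
  unfold cis, Cmod. simpl fst; simpl snd. rewrite E. apply sqrt_1.
Qed.

Lemma cis_0 : cis 0 = 1.
Proof. unfold cis. rewrite cos_0, sin_0. reflexivity. Qed.

Lemma Cmod_le_Rabs_Re_Im z : Cmod z <= Rabs (Re z) + Rabs (Im z).
Proof.
  unfold Cmod. destruct z as [a b]; simpl.
  pose proof (Rabs_pos a); pose proof (Rabs_pos b).
  apply Rsqr_incr_0_var; [| lra].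
  rewrite Rsqr_sqrt by nra. unfold Rsqr.
  pose proof (Rsqr_abs a); pose proof (Rsqr_abs b). unfold Rsqr in *. nra.
Qed.

Lemma Re_le_Cmod z : Re z <= Cmod z.
Proof. pose proof (re_le_Cmod z). pose proof (Rle_abs (Re z)). lra. Qed.

Lemma Rabs_Im_le_Cmod z : Rabs (Im z) <= Cmod z.
Proof.
  pose proof (re_le_Cmod (Ci * Cconj z)) as H.
  rewrite Cmod_mult, Cmod_Ci, Cmod_conj in H.
  destruct z; unfold Ci, Cconj, Cmult in H; simpl in H.
  replace (0 * r - 1 * - r0)%R with r0 in H by ring. simpl; lra.
Qed.

Close Scope C_scope.

(** * Continuity and complex-valued integrals *)

Notation CV := C_R_CompleteNormedModule.

Definition clamp (x : R) : R := Rmax 0 (Rmin 1 x).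

Lemma clamp_in x : 0 <= clamp x <= 1.
Proof. unfold clamp, Rmax, Rmin. repeat destruct Rle_dec; lra. Qed.

Lemma clamp_id x : 0 <= x <= 1 -> clamp x = x.
Proof. unfold clamp, Rmax, Rmin. intros. repeat destruct Rle_dec; lra. Qed.

Lemma clamp_lipschitz x y : Rabs (clamp x - clamp y) <= Rabs (x - y).
Proof. unfold clamp, Rmax, Rmin. repeat destruct Rle_dec; unfold Rabs; repeat destruct Rcase_abs; lra. Qed.

Definition Ccont (f : R -> C) (x : R) : Prop :=
  forall eps, 0 < eps -> exists delta, 0 < delta /\
    forall y, Rabs (y - x) < delta -> Cmod (f y - f x)%C < eps.

Lemma Ccont_continuous f x : Ccont f x -> @continuous R_UniformSpace CV f x.
Proof.
  intros H. apply filterlim_locally. intros eps.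
  destruct (H eps (cond_pos eps)) as [d [Hd Hy]].
  exists (mkposreal d Hd). intros y Hb. specialize (Hy y Hb).
  pose proof (re_le_Cmod (f y - f x)%C). pose proof (Rabs_Im_le_Cmod (f y - f x)%C).
  split; unfold ball; simpl; unfold AbsRing_ball, abs, minus, plus, opp; simpl;
  destruct (f y), (f x); simpl in *; lra.
Qed.

Lemma Ccont_const c x : Ccont (fun _ => c) x.
Proof.
  intros eps He. exists 1. split. lra. intros.
  replace (c - c)%C with (RtoC 0) by ring. rewrite Cmod_0. auto.
Qed.

Lemma Ccont_mult f g x : Ccont f x -> Ccont g x -> Ccont (fun y => f y * g y)%C x.
Proof.
  intros Hf Hg eps He.
  set (A := Cmod (f x)). set (B := Cmod (g x)).
  assert (HA: 0 <= A) by apply Cmod_ge_0. assert (HB: 0 <= B) by apply Cmod_ge_0.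
  set (e := Rmin 1 (eps / (A + B + 1) / 2)).
  assert (He0: 0 < e).
  { apply Rmin_pos. lra. apply Rmult_lt_0_compat; [|lra]. apply Rdiv_lt_0_compat; lra. }
  assert (He1: e <= 1) by apply Rmin_l.
  assert (He2: e * (A + B + 1) <= eps / 2).
  { apply Rle_trans with ((eps / (A + B + 1) / 2) * (A + B + 1)).
    apply Rmult_le_compat_r. lra. apply Rmin_r. field_simplify; lra. }
  destruct (Hf e He0) as [d1 [Hd1 H1]].
  destruct (Hg e He0) as [d2 [Hd2 H2]].
  exists (Rmin d1 d2). split. apply Rmin_pos; auto.
  intros y Hy.
  specialize (H1 y (Rlt_le_trans _ _ _ Hy (Rmin_l _ _))).
  specialize (H2 y (Rlt_le_trans _ _ _ Hy (Rmin_r _ _))).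
  replace (f y * g y - f x * g x)%C
    with ((f y - f x) * (g y - g x) + (f y - f x) * g x + f x * (g y - g x))%C by ring.
  eapply Rle_lt_trans. apply Cmod_triangle.
  eapply Rle_lt_trans. apply Rplus_le_compat_r. apply Cmod_triangle.
  rewrite !Cmod_mult. fold A B.
  pose proof (Cmod_ge_0 (f y - f x)%C). pose proof (Cmod_ge_0 (g y - g x)%C).
  assert (Cmod (f y - f x)%C * Cmod (g y - g x)%C <= e * e) by (apply Rmult_le_compat; lra).
  assert (Cmod (f y - f x)%C * B <= e * B) by (apply Rmult_le_compat_r; lra).
  assert (A * Cmod (g y - g x)%C <= A * e) by (apply Rmult_le_compat_l; lra).
  nra.
Qed.

Lemma continuity_pt_eps f x : continuity_pt f x -> forall eps, 0 < eps ->
  exists delta, 0 < delta /\ forall y, Rabs (y - x) < delta -> Rabs (f y - f x) < eps.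
Proof.
  intros H eps He. destruct (H eps He) as [d [Hd Hy]]. exists d. split. lra.
  intros y Hyx. destruct (Req_dec y x). subst. rewrite Rminus_diag, Rabs_R0. auto.
  apply Hy. split. split. exact I. auto. simpl. unfold Rdist. auto.
Qed.

Lemma Ccont_Re_Im f x :
  continuity_pt (fun y => Re (f y)) x -> continuity_pt (fun y => Im (f y)) x -> Ccont f x.
Proof.
  intros H1 H2 eps He.
  destruct (continuity_pt_eps _ _ H1 (eps/2)) as [d1 [Hd1 K1]]; [lra|].
  destruct (continuity_pt_eps _ _ H2 (eps/2)) as [d2 [Hd2 K2]]; [lra|].
  exists (Rmin d1 d2). split. apply Rmin_pos; auto.
  intros y Hy. eapply Rle_lt_trans. apply Cmod_le_Rabs_Re_Im.
  specialize (K1 y (Rlt_le_trans _ _ _ Hy (Rmin_l _ _))).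
  specialize (K2 y (Rlt_le_trans _ _ _ Hy (Rmin_r _ _))).
  destruct (f y), (f x). simpl in *. unfold Rminus in *. lra.
Qed.

Lemma Ccont_cis_scal s x : Ccont (fun y => cis (s * y)) x.
Proof.
  apply Ccont_Re_Im; simpl.
  apply (continuity_pt_comp (fun y => s * y) cos x). reg. apply continuity_cos.
  apply (continuity_pt_comp (fun y => s * y) sin x). reg. apply continuity_sin.
Qed.

Lemma continuity_pt_Re_Im_of_Ccont f x :
  Ccont f x -> continuity_pt (fun y => Re (f y)) x /\ continuity_pt (fun y => Im (f y)) x.
Proof.
  intros H. split; apply continuity_pt_filterlim; intros P [e HP];
    destruct (H e (cond_pos e)) as [d [Hd Hy]]; exists (mkposreal d Hd);
    intros y Hyx; apply HP; specialize (Hy y Hyx);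
    [pose proof (re_le_Cmod (f y - f x)%C) | pose proof (Rabs_Im_le_Cmod (f y - f x)%C)];
    unfold ball; simpl; unfold AbsRing_ball, abs, minus, plus, opp; simpl;
    destruct (f y), (f x); simpl in *; lra.
Qed.

Section ContinuousOn01.
Variable psi : R -> C.
Hypothesis Hc : cont_on01 psi.

Definition psi_ext (x : R) : C := psi (clamp x).

Lemma psi_ext_Ccont x : Ccont psi_ext x.
Proof.
  intros eps He. destruct (Hc (clamp x) (clamp_in x) eps He) as [d [Hd H]].
  exists d. split; auto. intros y Hy. unfold psi_ext. apply H. apply clamp_in.
  eapply Rle_lt_trans. apply clamp_lipschitz. auto.
Qed.

Lemma cont_on01_uniform : forall eps, 0 < eps -> exists delta, 0 < delta /\
  forall x y, 0 <= x <= 1 -> 0 <= y <= 1 -> Rabs (x - y) < delta -> Cmod (psi x - psi y)%C < eps.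
Proof.
  intros eps He.
  assert (Hcomp: forall x, 0 <= x <= 1 ->
    continuity_pt (fun y => Re (psi_ext y)) x /\ continuity_pt (fun y => Im (psi_ext y)) x).
  { intros x _. apply continuity_pt_Re_Im_of_Ccont, psi_ext_Ccont. }
  destruct (Heine _ _ (compact_P3 0 1) (fun x Hx => proj1 (Hcomp x Hx))
              (mkposreal (eps/2) ltac:(lra))) as [d1 H1].
  destruct (Heine _ _ (compact_P3 0 1) (fun x Hx => proj2 (Hcomp x Hx))
              (mkposreal (eps/2) ltac:(lra))) as [d2 H2].
  exists (Rmin d1 d2). split. apply Rmin_pos; apply cond_pos.
  intros x y Hx Hy Hxy.
  specialize (H1 x y Hx Hy (Rlt_le_trans _ _ _ Hxy (Rmin_l _ _))).
  specialize (H2 x y Hx Hy (Rlt_le_trans _ _ _ Hxy (Rmin_r _ _))).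
  simpl in H1, H2. unfold psi_ext in H1, H2. rewrite !clamp_id in H1, H2 by auto.
  eapply Rle_lt_trans. apply Cmod_le_Rabs_Re_Im.
  destruct (psi x), (psi y). simpl in *. unfold Rminus in *. lra.
Qed.

End ContinuousOn01.

Lemma part_mono a b p n : partition a b p n -> forall i j, (i <= j <= n)%nat -> p i <= p j.
Proof.
  intros [_ [_ Hm]] i j [Hij Hjn].
  induction j. replace i with 0%nat by lia. lra.
  destruct (Nat.eq_dec i (S j)). subst; lra.
  specialize (IHj ltac:(lia) ltac:(lia)). specialize (Hm j ltac:(lia)). lra.
Qed.

Lemma part_in p n : partition 0 1 p n -> forall i, (i <= n)%nat -> 0 <= p i <= 1.
Proof.
  intros H i Hi. pose proof (part_mono _ _ _ _ H 0 i ltac:(lia)).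
  pose proof (part_mono _ _ _ _ H i n ltac:(lia)). destruct H as [Ha0 [Ha1 _]]. lra.
Qed.

Lemma part_length_pos p n : partition 0 1 p n -> (0 < n)%nat.
Proof. intros [H0 [H1 _]]. destruct n. rewrite H0 in H1. lra. lia. Qed.

Lemma plus_CV (a b : C) : @plus CV a b = (a + b)%C.
Proof. reflexivity. Qed.

Lemma minus_CV (a b : C) : @minus CV a b = (a - b)%C.
Proof. reflexivity. Qed.

Lemma norm_CV (a : C) : @norm R_AbsRing CV a = Cmod a.
Proof. symmetry. apply Cmod_norm. Qed.

Lemma is_RInt_C_pair (f : R -> C) a b lu lv :
  is_RInt (fun t => fst (f t)) a b lu -> is_RInt (fun t => snd (f t)) a b lv ->
  is_RInt (V:=CV) f a b (lu, lv).
Proof. intros. apply (is_RInt_fct_extend_pair (U:=R_NormedModule) (V:=R_NormedModule)); auto. Qed.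

Lemma is_RInt_C_fst (f : R -> C) a b l :
  is_RInt (V:=CV) f a b l -> is_RInt (fun t => fst (f t)) a b (fst l).
Proof. intros. apply (is_RInt_fct_extend_fst (U:=R_NormedModule) (V:=R_NormedModule)); auto. Qed.

Lemma is_RInt_C_snd (f : R -> C) a b l :
  is_RInt (V:=CV) f a b l -> is_RInt (fun t => snd (f t)) a b (snd l).
Proof. intros. apply (is_RInt_fct_extend_snd (U:=R_NormedModule) (V:=R_NormedModule)); auto. Qed.

Lemma is_RInt_lin_comb (f g : R -> R) a b l1 l2 c1 c2 :
  is_RInt f a b l1 -> is_RInt g a b l2 ->
  is_RInt (fun t => c1 * f t + c2 * g t) a b (c1 * l1 + c2 * l2).
Proof.
  intros A B. apply (is_RInt_plus (V:=R_NormedModule) (fun t => c1 * f t) (fun t => c2 * g t)).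
  apply (is_RInt_scal (V:=R_NormedModule)); auto. apply (is_RInt_scal (V:=R_NormedModule)); auto.
Qed.

Lemma is_RInt_Cmult (c : C) (f : R -> C) a b l :
  is_RInt (V:=CV) f a b l -> is_RInt (V:=CV) (fun x => c * f x)%C a b (c * l)%C.
Proof.
  intros H. pose proof (is_RInt_C_fst _ _ _ _ H) as H1. pose proof (is_RInt_C_snd _ _ _ _ H) as H2.
  destruct c as [c1 c2], l as [l1 l2]. simpl in H1, H2.
  replace ((c1, c2) * (l1, l2))%C with (c1 * l1 + (- c2) * l2, c1 * l2 + c2 * l1)
    by (unfold Cmult; simpl; f_equal; ring).
  apply is_RInt_C_pair.
  - eapply is_RInt_ext; [| apply is_RInt_lin_comb; [exact H1 | exact H2]].
    intros x _. unfold Cmult. simpl. ring.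
  - eapply is_RInt_ext; [| apply is_RInt_lin_comb; [exact H2 | exact H1]].
    intros x _. unfold Cmult. simpl. ring.
Qed.

Definition dcis (s x : R) : C := (Ci * RtoC s * cis (s * x))%C.

Lemma dcis_eq s x : dcis s x = (- s * sin (s * x), s * cos (s * x)).
Proof. unfold dcis, cis, Ci, RtoC, Cmult; simpl. f_equal; ring. Qed.

Lemma Cmod_dcis s x : Cmod (dcis s x) = Rabs s.
Proof. unfold dcis. rewrite !Cmod_mult, Cmod_Ci, Cmod_cis, Cmod_R. ring. Qed.

Lemma is_RInt_dcis s a b : is_RInt (V:=CV) (dcis s) a b (cis (s * b) - cis (s * a))%C.
Proof.
  assert (A: is_RInt (fun x => - s * sin (s * x)) a b (cos (s * b) - cos (s * a))).
  { apply (is_RInt_derive (fun x => cos (s * x))). intros; auto_derive; auto. ring.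
    intros. apply continuity_pt_filterlim.
    apply (continuity_pt_mult (fun _ => -s) (fun x => sin (s * x))). reg.
    apply (continuity_pt_comp (fun y => s * y) sin x). reg. apply continuity_sin. }
  assert (B: is_RInt (fun x => s * cos (s * x)) a b (sin (s * b) - sin (s * a))).
  { apply (is_RInt_derive (fun x => sin (s * x))). intros; auto_derive; auto. ring.
    intros. apply continuity_pt_filterlim.
    apply (continuity_pt_mult (fun _ => s) (fun x => cos (s * x))). reg.
    apply (continuity_pt_comp (fun y => s * y) cos x). reg. apply continuity_cos. }
  replace (cis (s * b) - cis (s * a))%C with (cos (s * b) - cos (s * a), sin (s * b) - sin (s * a))
    by (unfold cis, Cminus, Cplus, Copp; simpl; f_equal; ring).
  apply is_RInt_C_pair.
  - eapply is_RInt_ext; [| exact A]. intros x _. rewrite dcis_eq. reflexivity.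
  - eapply is_RInt_ext; [| exact B]. intros x _. rewrite dcis_eq. reflexivity.
Qed.

Lemma Csum_RInt_Chasles (g : R -> C) (y : nat -> R) n :
  (forall a b, ex_RInt (V:=CV) g a b) ->
  Csum (fun k => RInt (V:=CV) g (y k) (y (S k))) n = RInt (V:=CV) g (y O) (y n).
Proof.
  intros Hex. induction n; simpl.
  - rewrite RInt_point. reflexivity.
  - rewrite IHn, <- plus_CV. apply (RInt_Chasles (V:=CV)); apply Hex.
Qed.

Definition framed_tags (xi : nat -> R) (n k : nat) : R :=
  match k with O => 0 | S j => if (j <? n)%nat then xi j else 1 end.

Lemma framed_tags_around p xi n d :
  partition 0 1 p n -> (forall k, (k < n)%nat -> p (S k) - p k < d) ->
  (forall k, (k < n)%nat -> p k <= xi k <= p (S k)) ->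
  forall k, (k <= n)%nat ->
    framed_tags xi n k <= p k <= framed_tags xi n (S k) /\
    p k - framed_tags xi n k < d /\ framed_tags xi n (S k) - p k < d.
Proof.
  intros Hp Hmesh Htag k Hk. pose proof (part_length_pos _ _ Hp) as Hn.
  destruct Hp as [Hp0 [Hpn _]].
  assert (Hd: 0 < d) by (specialize (Hmesh 0%nat Hn); specialize (Htag 0%nat Hn); lra).
  simpl framed_tags. destruct (Nat.ltb_spec k n) as [Hlt|Hge].
  - specialize (Htag k Hlt) as Tk. specialize (Hmesh k Hlt) as Mk.
    destruct k as [|j]; simpl.
    + rewrite Hp0 in *. lra.
    + destruct (Nat.ltb_spec j n); [|lia].
      specialize (Htag j ltac:(lia)). specialize (Hmesh j ltac:(lia)). lra.
  - replace k with n by lia. destruct n as [|j]; [lia|]. simpl.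
    destruct (Nat.ltb_spec j (S j)); [|lia].
    specialize (Htag j ltac:(lia)). specialize (Hmesh j ltac:(lia)). rewrite Hpn in *. lra.
Qed.

Lemma framed_tags_in p xi n :
  partition 0 1 p n -> (forall k, (k < n)%nat -> p k <= xi k <= p (S k)) ->
  forall k, 0 <= framed_tags xi n k <= 1.
Proof.
  intros Hp Htag [|j]; simpl. lra.
  destruct (Nat.ltb_spec j n). 2: lra.
  specialize (Htag j H). pose proof (part_in _ _ Hp j ltac:(lia)). pose proof (part_in _ _ Hp (S j) ltac:(lia)).
  lra.
Qed.

(** * Integration by parts: the Stieltjes integral Psi *)

Section IntegrationByParts.
Variable psi : R -> C.
Hypothesis Hc : cont_on01 psi.

Let g (s x : R) : C := (psi_ext psi x * dcis s x)%C.

Lemma ex_RInt_psi_dcis s a b : ex_RInt (V:=CV) (g s) a b.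
Proof.
  apply ex_RInt_continuous. intros. apply Ccont_continuous, Ccont_mult.
  apply psi_ext_Ccont; auto.
  unfold dcis. apply Ccont_mult. apply Ccont_const. apply Ccont_cis_scal.
Qed.

Lemma RInt_psi_dcis_piece s a b c e : 0 <= a <= b -> b <= 1 ->
  (forall x, a <= x <= b -> Cmod (psi x - c)%C <= e) ->
  Cmod (RInt (V:=CV) (g s) a b - c * (cis (s * b) - cis (s * a)))%C <= (b - a) * (e * Rabs s).
Proof.
  intros Hab Hb Hx.
  assert (Hi: is_RInt (V:=CV) (fun x => g s x - c * dcis s x)%C a b
                 (RInt (V:=CV) (g s) a b - c * (cis (s * b) - cis (s * a)))%C).
  { rewrite <- minus_CV. apply (is_RInt_minus (V:=CV)). apply RInt_correct, ex_RInt_psi_dcis.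
    apply is_RInt_Cmult, is_RInt_dcis. }
  rewrite <- norm_CV. refine (norm_RInt_le_const (V:=CV) _ a b _ _ (proj2 Hab) _ Hi).
  intros x Hx'. rewrite norm_CV. unfold g, psi_ext. rewrite clamp_id by lra.
  replace (psi x * dcis s x - c * dcis s x)%C with ((psi x - c) * dcis s x)%C by ring.
  rewrite Cmod_mult, Cmod_dcis. apply Rmult_le_compat_r. apply Rabs_pos. auto.
Qed.

(* The paper's Psi(s) = int_0^1 e^{isx} dpsi(x), written in integrated-by-parts form. *)
Definition Psi (s : R) : C := (- RInt (V:=CV) (g s) 0 1)%C.

Hypothesis H0 : psi 0 = 0%C.
Hypothesis H1 : psi 1 = 0%C.

(* Abel summation against the framed tags y_k turns the RS sum into a sum of pieces of -Psi. *)
Lemma RS_sum_minus_Psi s p xi n : partition 0 1 p n ->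
  let y := framed_tags xi n in
  (Csum (fun k => cis (s * xi k) * (psi (p (S k)) - psi (p k))) n - Psi s)%C
  = Csum (fun k => RInt (V:=CV) (g s) (y k) (y (S k))
                   - psi (p k) * (cis (s * y (S k)) - cis (s * y k)))%C (S n).
Proof.
  intros [Hp0 [Hpn _]] y.
  rewrite Csum_minus, Csum_RInt_Chasles by apply ex_RInt_psi_dcis.
  rewrite (Csum_abel (fun k => psi (p k)) (fun k => cis (s * y k))).
  rewrite Hp0, Hpn, H0, H1.
  replace (y O) with 0 by reflexivity. replace (y (S n)) with 1
    by (unfold y; simpl; destruct (Nat.ltb_spec n n); [lia | reflexivity]).
  rewrite (Csum_ext (fun k => cis (s * xi k) * _)%C
             (fun k => cis (s * y (S k)) * (psi (p (S k)) - psi (p k)))%C).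
  - unfold Psi. ring.
  - intros k Hk. unfold y; simpl. destruct (Nat.ltb_spec k n); [reflexivity | lia].
Qed.

Lemma is_RS_integral_Psi s : is_RS_integral (fun x => cis (s * x)) psi 0 1 (Psi s).
Proof.
  intros eps He.
  set (e := eps / 2 / (Rabs s + 1)).
  assert (He0: 0 < e) by (unfold e; apply Rdiv_lt_0_compat; pose proof (Rabs_pos s); lra).
  destruct (cont_on01_uniform psi Hc e He0) as [d [Hd Hu]].
  exists d. split; auto. intros p xi n Hn Hp Hmesh Htag.
  rewrite (RS_sum_minus_Psi s p xi n Hp). set (y := framed_tags xi n).
  pose proof (framed_tags_around p xi n d Hp Hmesh Htag) as Hy. fold y in Hy.
  pose proof (framed_tags_in p xi n Hp Htag) as Hin. fold y in Hin.
  eapply Rle_lt_trans. apply Cmod_Csum.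
  eapply Rle_lt_trans. apply rsum_le with (g := fun k => (y (S k) - y k) * (e * Rabs s)).
  - intros k Hk. pose proof (part_in _ _ Hp k ltac:(lia)).
    destruct (Hy k ltac:(lia)) as [[Hlo Hhi] [Hdl Hdr]].
    pose proof (Hin k). pose proof (Hin (S k)).
    apply RInt_psi_dcis_piece; try lra.
    intros x Hx. left. apply Hu; [lra | lra |]. unfold Rabs; destruct Rcase_abs; lra.
  - rewrite (rsum_ext _ (fun k => e * Rabs s * y (S k) - e * Rabs s * y k)) by (intros; ring).
    rewrite (rsum_tele (fun k => e * Rabs s * y k)).
    replace (y (S n)) with 1 by (unfold y; simpl; destruct (Nat.ltb_spec n n); [lia | reflexivity]).
    simpl. assert (e * (Rabs s + 1) = eps / 2) by (unfold e; field; pose proof (Rabs_pos s); lra).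
    pose proof (Rabs_pos s). nra.
Qed.

Lemma Psi_hatpsi s : Psi s = (- (Ci * RtoC s * hatpsi psi s))%C.
Proof.
  assert (Hhat: is_RInt (V:=CV) (fun x => cis (s * x) * psi_ext psi x)%C 0 1 (hatpsi psi s)).
  { assert (Ex: ex_RInt (V:=CV) (fun x => cis (s * x) * psi_ext psi x)%C 0 1).
    { apply ex_RInt_continuous. intros. apply Ccont_continuous, Ccont_mult.
      apply Ccont_cis_scal. apply psi_ext_Ccont; auto. }
    unfold hatpsi. apply is_RInt_C_pair.
    - rewrite (RInt_ext (V:=R_CompleteNormedModule) _ (fun x => fst (cis (s * x) * psi_ext psi x)%C)).
      + apply (RInt_correct (V:=R_CompleteNormedModule)).
        apply (ex_RInt_fct_extend_fst (U:=R_NormedModule) (V:=R_NormedModule)). exact Ex.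
      + intros x Hx. rewrite Rmin_left, Rmax_right in Hx by lra.
        unfold psi_ext. rewrite clamp_id by lra. reflexivity.
    - rewrite (RInt_ext (V:=R_CompleteNormedModule) _ (fun x => snd (cis (s * x) * psi_ext psi x)%C)).
      + apply (RInt_correct (V:=R_CompleteNormedModule)).
        apply (ex_RInt_fct_extend_snd (U:=R_NormedModule) (V:=R_NormedModule)). exact Ex.
      + intros x Hx. rewrite Rmin_left, Rmax_right in Hx by lra.
        unfold psi_ext. rewrite clamp_id by lra. reflexivity. }
  unfold Psi. f_equal. apply (is_RInt_unique (V:=CV)).
  eapply is_RInt_ext; [| apply (is_RInt_Cmult (Ci * RtoC s)%C); exact Hhat].
  intros x _. unfold g, dcis. simpl. ring.
Qed.

End IntegrationByParts.

(** * Uniform partitions and uniqueness of the Stieltjes integral *)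

Definition upart (N k : nat) : R := INR k / INR N.

Lemma upart_partition N : (0 < N)%nat -> partition 0 1 (upart N) N.
Proof.
  intros HN. assert (0 < INR N) by (apply lt_0_INR; auto).
  unfold partition, upart. split. simpl. unfold Rdiv; ring. split. field; lra.
  intros k Hk. rewrite S_INR. apply Rmult_le_compat_r. left; apply Rinv_0_lt_compat; auto. lra.
Qed.

Lemma upart_step N k : (0 < N)%nat -> upart N (S k) - upart N k = / INR N.
Proof. intros HN. assert (0 < INR N) by (apply lt_0_INR; auto). unfold upart. rewrite S_INR. field. lra. Qed.

Lemma eventually_inv_INR_lt d : 0 < d -> exists N0, forall N, (N0 <= N)%nat -> (0 < N)%nat -> / INR N < d.
Proof.
  intros Hd. destruct (INR_unbounded (/ d + 1)) as [M HM]. exists M. intros N HN HN0.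
  assert (0 < INR N) by (apply lt_0_INR; auto).
  assert (/ d < INR N) by (apply le_INR in HN; lra).
  rewrite <- (Rinv_inv d). apply Rinv_lt_contravar; auto.
  apply Rmult_lt_0_compat; auto. apply Rinv_0_lt_compat; auto.
Qed.

Definition RSsum (f g : R -> C) (N : nat) : C :=
  Csum (fun k => f (upart N k) * (g (upart N (S k)) - g (upart N k)))%C N.

Lemma is_RS_integral_upart f g I : is_RS_integral f g 0 1 I -> forall eps, 0 < eps ->
  exists N0, forall N, (N0 <= N)%nat -> (0 < N)%nat -> Cmod (RSsum f g N - I)%C < eps.
Proof.
  intros H eps He. destruct (H eps He) as [d [Hd Hp]].
  destruct (eventually_inv_INR_lt d Hd) as [N0 HN0]. exists N0. intros N HN HNpos.
  assert (Hstep: forall k, upart N (S k) - upart N k = / INR N) by (intros; apply upart_step; auto).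
  assert (0 < / INR N) by (apply Rinv_0_lt_compat, lt_0_INR; auto).
  apply Hp; auto. apply upart_partition; auto.
  - intros k _. rewrite Hstep. auto.
  - intros k _. specialize (Hstep k). lra.
Qed.

Lemma is_RS_integral_unique f g I1 I2 :
  is_RS_integral f g 0 1 I1 -> is_RS_integral f g 0 1 I2 -> I1 = I2.
Proof.
  intros A B. destruct (Req_dec (Cmod (I1 - I2)%C) 0) as [E|E].
  - apply Cmod_eq_0 in E. replace I1 with (I1 - I2 + I2)%C by ring. rewrite E. ring.
  - exfalso. pose proof (Cmod_ge_0 (I1 - I2)%C).
    set (e := Cmod (I1 - I2)%C / 2).
    destruct (is_RS_integral_upart _ _ _ A e) as [N1 HN1]. unfold e; lra.
    destruct (is_RS_integral_upart _ _ _ B e) as [N2 HN2]. unfold e; lra.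
    set (N := S (N1 + N2)).
    specialize (HN1 N ltac:(unfold N; lia) ltac:(unfold N; lia)).
    specialize (HN2 N ltac:(unfold N; lia) ltac:(unfold N; lia)).
    assert (Cmod (I1 - I2)%C <= Cmod (RSsum f g N - I1)%C + Cmod (RSsum f g N - I2)%C).
    { replace (I1 - I2)%C with (- (RSsum f g N - I1) + (RSsum f g N - I2))%C by ring.
      eapply Rle_trans. apply Cmod_triangle. rewrite Cmod_opp. lra. }
    unfold e in *. lra.
Qed.

Lemma Psi_decay_pos psi : cont_on01 psi ->
  is_lim (fun t => Cmod (RtoC (t ^ 1) * Cderive_n 0 (hatpsi psi) t)%C) p_infty 0 ->
  forall eps, 0 < eps -> exists T, forall t, T < t -> Cmod (Psi psi t) < eps.
Proof.
  intros Hc Hl eps He. apply is_lim_spec in Hl. destruct (Hl (mkposreal eps He)) as [T HT].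
  exists T. intros t Ht. specialize (HT t Ht). simpl in HT.
  rewrite Psi_hatpsi, Cmod_opp, !Cmod_mult, Cmod_Ci, Cmod_R by auto.
  rewrite !Cmod_mult, Cmod_R, Rmult_1_r, Rminus_0_r in HT.
  eapply Rle_lt_trans; [apply Rle_abs|]. rewrite Rmult_1_l. exact HT.
Qed.

(** * Total variation and common refinements *)

Lemma div_mod_succ m n : (0 < n)%nat ->
  ((S (m mod n) < n)%nat -> (S m / n = m / n)%nat /\ (S m mod n = S (m mod n))%nat) /\
  (S (m mod n) = n -> (S m / n = S (m / n))%nat /\ (S m mod n = 0)%nat).
Proof.
  intros Hn. pose proof (Nat.div_mod m n ltac:(lia)). pose proof (Nat.mod_upper_bound m n ltac:(lia)).
  split; intros.
  - replace (S m) with (S (m mod n) + (m / n) * n)%nat by lia.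
    rewrite Nat.div_add, Nat.Div0.mod_add by lia. rewrite Nat.div_small, Nat.mod_small by lia. lia.
  - replace (S m) with (0 + (S (m / n)) * n)%nat by lia.
    rewrite Nat.div_add, Nat.Div0.mod_add, Nat.Div0.div_0_l, Nat.Div0.mod_0_l by lia. auto.
Qed.

Section Variation.
Variable psi : R -> C.

Definition var_sum (p : nat -> R) (n : nat) : R :=
  rsum (fun k => Cmod (psi (p (S k)) - psi (p k))%C) n.

Lemma var_sum_nonneg p n : 0 <= var_sum p n.
Proof. apply rsum_nonneg. intros; apply Cmod_ge_0. Qed.

Lemma total_variation_sup : bounded_variation01 psi ->
  exists V, 0 <= V /\ (forall p n, partition 0 1 p n -> var_sum p n <= V) /\
  (forall eps, 0 < eps -> exists p n, partition 0 1 p n /\ V - eps < var_sum p n).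
Proof.
  intros [M HM].
  set (E := fun r => exists p n, partition 0 1 p n /\ r = var_sum p n).
  assert (Eb: bound E).
  { exists M. intros r [p [n [Hp Hr]]]. subst r. unfold var_sum. rewrite <- rsum_sum_f_R0.
    apply HM; auto. eapply part_length_pos; eauto. }
  assert (Ene: E (var_sum INR 1)).
  { exists INR, 1%nat. split; auto. split. reflexivity. split. simpl; lra.
    intros k Hk. rewrite S_INR. lra. }
  destruct (completeness E Eb (ex_intro _ _ Ene)) as [V [HV1 HV2]].
  exists V. split; [|split].
  - eapply Rle_trans. apply var_sum_nonneg. apply HV1, Ene.
  - intros p n Hp. apply HV1. exists p, n. auto.
  - intros eps He. apply NNPP. intros Hn.
    assert (is_upper_bound E (V - eps)).
    { intros r [p [n [Hp Hr]]]. subst r. apply Rnot_lt_le. intros Hl. apply Hn. exists p, n. auto. }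
    specialize (HV2 _ H). lra.
Qed.

(* Refining a partition p by a partition q: the increment of psi over [p j, p (S j)]
   is split along the cells [q b, q (S b)]. *)
Variable q : nat -> R.

Definition clip (b : nat) (x : R) : R := Rmax (q b) (Rmin (q (S b)) x).

Lemma clip_in b x : q b <= q (S b) -> q b <= x <= q (S b) -> clip b x = x.
Proof. unfold clip, Rmax, Rmin. intros. repeat destruct Rle_dec; lra. Qed.
Lemma clip_lo b x : q b <= q (S b) -> x <= q b -> clip b x = q b.
Proof. unfold clip, Rmax, Rmin. intros. repeat destruct Rle_dec; lra. Qed.
Lemma clip_hi b x : q b <= q (S b) -> q (S b) <= x -> clip b x = q (S b).
Proof. unfold clip, Rmax, Rmin. intros. repeat destruct Rle_dec; lra. Qed.
Lemma clip_mono b x y : x <= y -> clip b x <= clip b y.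
Proof. unfold clip, Rmax, Rmin. intros. repeat destruct Rle_dec; lra. Qed.

Variable B : nat.
Hypothesis HQ : partition 0 1 q B.

Lemma Csum_psi_clip z : 0 <= z <= 1 ->
  Csum (fun b => psi (clip b z)) B = (psi z + Csum (fun i => psi (q (S i))) (pred B))%C.
Proof.
  intros Hz. pose proof (part_length_pos _ _ HQ) as HB.
  pose proof (part_mono _ _ _ _ HQ) as Hm. destruct HQ as [Hq0 [HqB _]].
  assert (G: forall m, (1 <= m <= B)%nat -> q 0%nat <= z <= q m ->
     Csum (fun b => psi (clip b z)) m = (psi z + Csum (fun i => psi (q (S i))) (pred m))%C).
  { induction m; intros Hm1 Hzm. lia. destruct m.
    - simpl. rewrite clip_in. ring. apply Hm; lia. lra.
    - change (Csum (fun b => psi (clip b z)) (S (S m)))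
        with (Csum (fun b => psi (clip b z)) (S m) + psi (clip (S m) z))%C.
      assert (Hq: Csum (fun i => psi (q (S i))) (pred (S (S m)))
                  = (Csum (fun i => psi (q (S i))) (pred (S m)) + psi (q (S m)))%C).
      { simpl pred. destruct m; simpl; [ring | reflexivity]. }
      rewrite Hq.
      destruct (Rle_dec z (q (S m))).
      + rewrite IHm by (lia || lra). rewrite clip_lo by (first [apply Hm; lia | lra]). ring.
      + rewrite (Csum_ext _ (fun i => psi (q (S i)))).
        * rewrite (clip_in (S m) z); [ | apply Hm; lia | lra]. simpl. ring.
        * intros k Hk. rewrite clip_hi. auto. apply Hm; lia.
          pose proof (Hm (S k) (S m) ltac:(lia)). lra. }
  apply G. lia. rewrite Hq0, HqB. auto.
Qed.

Definition piece_incr (p : nat -> R) (j b : nat) : C :=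
  (psi (clip b (p (S j))) - psi (clip b (p j)))%C.

Lemma Csum_piece_incr_cells p n j : partition 0 1 p n -> (j < n)%nat ->
  Csum (fun b => piece_incr p j b) B = (psi (p (S j)) - psi (p j))%C.
Proof.
  intros Hp Hj. unfold piece_incr. rewrite Csum_minus.
  rewrite !Csum_psi_clip by (apply (part_in _ _ Hp); lia). ring.
Qed.

Lemma Csum_piece_incr_steps p n b : partition 0 1 p n -> (b < B)%nat ->
  Csum (fun j => piece_incr p j b) n = (psi (q (S b)) - psi (q b))%C.
Proof.
  intros Hp Hb. unfold piece_incr. rewrite (Csum_tele (fun j => psi (clip b (p j)))).
  destruct Hp as [Hp0 [Hpn _]]. rewrite Hp0, Hpn.
  pose proof (part_in _ _ HQ b ltac:(lia)). pose proof (part_in _ _ HQ (S b) ltac:(lia)).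
  pose proof (part_mono _ _ _ _ HQ b (S b) ltac:(lia)).
  rewrite (clip_lo b 0), (clip_hi b 1); auto; lra.
Qed.

(* The common refinement of q and p, listed cell by cell of q. *)
Definition merge (p : nat -> R) (n m : nat) : R := clip (m / n)%nat (p (m mod n)%nat).

Lemma merge_succ p n m : partition 0 1 p n -> (m < B * n)%nat ->
  merge p n (S m) = clip (m / n) (p (S (m mod n))).
Proof.
  intros Hp Hm. pose proof (part_length_pos _ _ Hp) as Hn.
  destruct (div_mod_succ m n Hn) as [D1 D2]. pose proof (Nat.mod_upper_bound m n ltac:(lia)).
  assert (Hb: (m / n < B)%nat) by (apply Nat.Div0.div_lt_upper_bound; lia).
  unfold merge. destruct (Nat.eq_dec (S (m mod n)) n) as [E|E].
  - destruct (D2 E) as [-> ->]. destruct Hp as [Hp0 [Hpn _]]. rewrite Hp0, E, Hpn.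
    pose proof (part_in _ _ HQ (S (m / n)) ltac:(lia)).
    pose proof (part_mono _ _ _ _ HQ (m / n) (S (m / n)) ltac:(lia)).
    rewrite (clip_hi (m / n) 1) by lra. unfold clip, Rmax, Rmin. repeat destruct Rle_dec; lra.
  - destruct (D1 ltac:(lia)) as [-> ->]. reflexivity.
Qed.

Lemma merge_partition p n : partition 0 1 p n -> partition 0 1 (merge p n) (B * n).
Proof.
  intros Hp. pose proof (part_length_pos _ _ Hp) as Hn. pose proof Hp as [Hp0 [Hpn Hpm]].
  pose proof HQ as [Hq0 [HqB _]].
  split; [|split].
  - unfold merge, clip. rewrite Nat.Div0.div_0_l, Nat.Div0.mod_0_l. rewrite Hp0, Hq0.
    pose proof (part_in _ _ HQ 1%nat ltac:(pose proof (part_length_pos _ _ HQ); lia)).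
    unfold Rmax, Rmin. repeat destruct Rle_dec; lra.
  - unfold merge, clip. rewrite Nat.div_mul, Nat.Div0.mod_mul by lia. rewrite Hp0, HqB.
    unfold Rmax, Rmin. repeat destruct Rle_dec; lra.
  - intros m Hm. rewrite merge_succ by auto. apply clip_mono, Hpm.
    apply Nat.mod_upper_bound. lia.
Qed.

Lemma var_sum_merge p n : partition 0 1 p n ->
  rsum (fun b => rsum (fun j => Cmod (piece_incr p j b)) n) B = var_sum (merge p n) (B * n).
Proof.
  intros Hp. pose proof (part_length_pos _ _ Hp) as Hn.
  unfold var_sum. rewrite <- (rsum_div_mod (fun b j => Cmod (piece_incr p j b)) B n Hn).
  apply rsum_ext. intros m Hm. rewrite merge_succ by auto. reflexivity.
Qed.

Lemma piece_incr_nonzero p j b : q b <= q (S b) -> p j <= p (S j) ->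
  piece_incr p j b <> 0%C -> q b < q (S b) /\ q b < p (S j) /\ p j < q (S b).
Proof.
  intros Hq Hp HD.
  repeat split; apply Rnot_le_lt; intros Hle; apply HD; unfold piece_incr;
    replace (clip b (p (S j))) with (clip b (p j)) by (unfold clip, Rmax, Rmin; repeat destruct Rle_dec; lra);
    ring.
Qed.

End Variation.

(** * A step function of sin x aligning dpsi *)

Lemma sin_increment_lower_bound x y : 0 <= y <= x -> x <= 1 -> cos 1 * (x - y) <= sin x - sin y.
Proof.
  intros Hy Hx. destruct (Req_dec x y). subst. lra.
  destruct (MVT_cor2 sin cos y x ltac:(lra) (fun c _ => derivable_pt_lim_sin c)) as [c [Hc Hc2]].
  rewrite Hc. apply Rmult_le_compat_r. lra. apply cos_decr_1; pose proof PI2_1; lra.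
Qed.

Lemma cos_1_pos : 0 < cos 1.
Proof. apply cos_gt_0; pose proof PI2_1; lra. Qed.

Lemma sin_le_01 x y : 0 <= y <= x -> x <= 1 -> sin y <= sin x.
Proof. intros. pose proof (sin_increment_lower_bound x y H H0). pose proof cos_1_pos. nra. Qed.

Definition Cconj_sign (z : C) : C :=
  if Req_EM_T (Cmod z) 0 then 1%C else (Cconj z / RtoC (Cmod z))%C.

Lemma Cconj_sign_mul z : (Cconj_sign z * z)%C = RtoC (Cmod z).
Proof.
  unfold Cconj_sign. destruct Req_EM_T as [E|E].
  - apply Cmod_eq_0 in E. subst. rewrite Cmod_0. ring.
  - assert (RtoC (Cmod z) <> 0%C) by (intros H; apply E, RtoC_inj, H).
    replace (Cconj z / RtoC (Cmod z) * z)%C with ((z * Cconj z) / RtoC (Cmod z))%C by (field; auto).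
    rewrite <- Cmod2_conj. replace (Cmod z ^ 2)%R with (Cmod z * Cmod z)%R by ring.
    rewrite RtoC_mult. field. auto.
Qed.

Lemma Cmod_Cconj_sign z : Cmod (Cconj_sign z) = 1.
Proof.
  unfold Cconj_sign. destruct Req_EM_T as [E|E]. apply Cmod_1.
  assert (RtoC (Cmod z) <> 0%C) by (intros H; apply E, RtoC_inj, H).
  rewrite Cmod_div; auto. rewrite Cmod_conj, Cmod_R, Rabs_right. field; auto. apply Rle_ge, Cmod_ge_0.
Qed.

Lemma finite_pos_lower_bound (P : nat -> Prop) (f : nat -> R) N :
  (forall k, (k < N)%nat -> P k -> 0 < f k) ->
  exists m, 0 < m /\ forall k, (k < N)%nat -> P k -> m <= f k.
Proof.
  induction N; intros H. exists 1. split. lra. intros; lia.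
  destruct IHN as [m [Hm Hk]]. intros; apply H; auto.
  destruct (classic (P N)) as [PN|PN].
  - exists (Rmin m (f N)). split. apply Rmin_pos; auto. intros k Hk' Pk.
    destruct (Nat.eq_dec k N). subst. apply Rmin_r. eapply Rle_trans. apply Rmin_l. apply Hk; auto. lia.
  - exists m. split; auto. intros k Hk' Pk. destruct (Nat.eq_dec k N). subst; contradiction. apply Hk; auto; lia.
Qed.

Definition ramp (w v : R) : R := Rmax 0 (Rmin 1 (v / w + 1/2)).

Lemma ramp_in w v : 0 <= ramp w v <= 1.
Proof. unfold ramp, Rmax, Rmin. repeat destruct Rle_dec; lra. Qed.

Lemma ramp_mono w u v : 0 < w -> u <= v -> ramp w u <= ramp w v.
Proof.
  intros Hw Huv. unfold ramp.
  assert (u / w <= v / w) by (apply Rmult_le_compat_r; [left; apply Rinv_0_lt_compat|]; lra).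
  unfold Rmax, Rmin. repeat destruct Rle_dec; lra.
Qed.

Lemma ramp_one w v : 0 < w -> w / 2 <= v -> ramp w v = 1.
Proof.
  intros Hw Hv. unfold ramp. assert (1/2 <= v / w) by (apply Rmult_le_reg_r with w; auto; field_simplify; lra).
  unfold Rmax, Rmin. repeat destruct Rle_dec; lra.
Qed.

Lemma ramp_zero w v : 0 < w -> v <= - (w / 2) -> ramp w v = 0.
Proof.
  intros Hw Hv. unfold ramp. assert (v / w <= - (1/2)) by (apply Rmult_le_reg_r with w; auto; field_simplify; lra).
  unfold Rmax, Rmin. repeat destruct Rle_dec; lra.
Qed.

Section Staircase.
Variables (B : nat) (sg : nat -> C) (c : nat -> R) (w : R).

Definition level (k : nat) (v : R) : R :=
  if Nat.eq_dec k 0 then 1 else if Compare_dec.lt_dec k B then ramp w (v - c k) else 0.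

Definition staircase (v : R) : C :=
  Csum (fun k => sg k * RtoC (level k v - level (S k) v))%C B.

Hypothesis Hw : 0 < w.
Hypothesis Hsg : forall k, Cmod (sg k) <= 1.
Hypothesis Hc : forall k j, (1 <= k <= j)%nat -> (j < B)%nat -> c k <= c j.

Lemma level_in k v : 0 <= level k v <= 1.
Proof. unfold level. destruct Nat.eq_dec. lra. destruct Compare_dec.lt_dec. apply ramp_in. lra. Qed.

Lemma level_antitone k v : level (S k) v <= level k v.
Proof.
  unfold level. destruct (Nat.eq_dec (S k) 0). lia. destruct (Nat.eq_dec k 0).
  - destruct Compare_dec.lt_dec. apply ramp_in. lra.
  - destruct (Compare_dec.lt_dec (S k) B); destruct (Compare_dec.lt_dec k B); try lia.
    + apply ramp_mono; auto. pose proof (Hc k (S k) ltac:(lia) l). lra.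
    + apply ramp_in.
    + lra.
Qed.

Lemma Cmod_staircase v : Cmod (staircase v) <= 1.
Proof.
  unfold staircase. eapply Rle_trans. apply Cmod_Csum.
  eapply Rle_trans. apply rsum_le with (g := fun k => level k v - level (S k) v).
  - intros k Hk. rewrite Cmod_mult, Cmod_R, Rabs_right by (pose proof (level_antitone k v); lra).
    pose proof (Hsg k). pose proof (level_antitone k v). pose proof (Cmod_ge_0 (sg k)). nra.
  - assert (T: forall n, rsum (fun k => level k v - level (S k) v) n = level 0 v - level n v)
      by (induction n; simpl; [lra | rewrite IHn; lra]).
    rewrite T. unfold level at 1. destruct Nat.eq_dec; [|lia]. pose proof (level_in B v). lra.
Qed.

Lemma staircase_eq k v : (k < B)%nat ->
  (forall i, (1 <= i <= k)%nat -> w / 2 <= v - c i) ->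
  (forall i, (k < i)%nat -> (i < B)%nat -> v - c i <= - (w / 2)) ->
  staircase v = sg k.
Proof.
  intros Hk Hlo Hhi. unfold staircase.
  rewrite <- (Csum_indic sg B k Hk). apply Csum_ext. intros i Hi.
  assert (R1: forall j, (j <= k)%nat -> level j v = 1).
  { intros j Hj. unfold level. destruct Nat.eq_dec. auto. destruct Compare_dec.lt_dec; [|lia].
    apply ramp_one; auto. apply Hlo. lia. }
  assert (R0: forall j, (k < j)%nat -> level j v = 0).
  { intros j Hj. unfold level. destruct Nat.eq_dec. lia. destruct Compare_dec.lt_dec; auto.
    apply ramp_zero; auto. }
  destruct (Nat.eq_dec i k).
  - subst. rewrite R1, R0 by lia. replace (1 - 0) with 1 by ring. ring.
  - destruct (Nat.lt_ge_cases i k).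
    + rewrite !R1 by lia. replace (1 - 1) with 0 by ring. ring.
    + rewrite !R0 by lia. replace (0 - 0) with 0 by ring. ring.
Qed.

End Staircase.

(* Given a partition a whose variation sum is within eps1 of the total variation V, cut every
   cell into three, with outer thirds of width at most tau (where psi moves by at most eps1/B),
   and build a function of modulus <= 1 of sin x which, on the middle third of cell k, is the
   phase aligning the increment of psi over that middle third with the positive reals. *)
Section PolarStep.
Variable psi : R -> C.
Variable V : R.
Hypothesis HV : forall p n, partition 0 1 p n -> var_sum psi p n <= V.
Variables (a : nat -> R) (B : nat).
Hypothesis Ha : partition 0 1 a B.
Variables (eps1 tau : R).
Hypothesis Htau : 0 < tau.
Hypothesis Hunif : forall x y, 0 <= x <= 1 -> 0 <= y <= 1 -> Rabs (x - y) <= tau ->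
  Cmod (psi x - psi y)%C <= eps1 / INR B.
Hypothesis Hnear : V - eps1 < var_sum psi a B.

Definition gap k := Rmin tau ((a (S k) - a k) / 3).

Definition trisect k r :=
  match r with
  | 0%nat => a k
  | 1%nat => a k + gap k
  | 2%nat => a (S k) - gap k
  | _ => a (S k)
  end.

Definition trisected m := trisect (m / 3) (m mod 3).

Definition cell_sign k := Cconj_sign (psi (trisect k 2) - psi (trisect k 1))%C.

Definition outer_weight (m : nat) : R := if Nat.eq_dec (m mod 3) 1 then 0 else 1.

Lemma a_in k : (k <= B)%nat -> 0 <= a k <= 1.
Proof. intros. apply (part_in _ _ Ha). auto. Qed.

Lemma gap_bounds k : (k < B)%nat -> 0 <= gap k <= tau /\ 3 * gap k <= a (S k) - a k.
Proof.
  intros Hk. assert (a k <= a (S k)) by (apply (part_mono _ _ _ _ Ha); lia).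
  unfold gap. split. split. apply Rmin_glb; lra. apply Rmin_l.
  pose proof (Rmin_r tau ((a (S k) - a k) / 3)). lra.
Qed.

Lemma trisected_succ m : trisected (S m) = trisect (m / 3) (S (m mod 3)).
Proof.
  unfold trisected. destruct (div_mod_succ m 3 ltac:(lia)) as [D1 D2].
  pose proof (Nat.mod_upper_bound m 3 ltac:(lia)).
  destruct (Nat.eq_dec (m mod 3) 2) as [E|E].
  - destruct (D2 ltac:(lia)) as [-> ->]. rewrite E. reflexivity.
  - destruct (D1 ltac:(lia)) as [-> ->]. reflexivity.
Qed.

Lemma trisected_partition : partition 0 1 trisected (B * 3).
Proof.
  destruct Ha as [Ha0 [HaB _]]. split; [|split].
  - exact Ha0.
  - unfold trisected. rewrite Nat.div_mul, Nat.Div0.mod_mul by lia. exact HaB.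
  - intros m Hm. rewrite trisected_succ. unfold trisected.
    assert (Hk: (m / 3 < B)%nat) by (apply Nat.Div0.div_lt_upper_bound; lia).
    pose proof (gap_bounds _ Hk). pose proof (Nat.mod_upper_bound m 3 ltac:(lia)).
    destruct (m mod 3) as [|[|[|r]]]; cbn [trisect]; lra || lia.
Qed.

Lemma var_sum_trisected :
  var_sum psi trisected (B * 3)
  = rsum (fun k => rsum (fun r => Cmod (psi (trisect k (S r)) - psi (trisect k r))%C) 3) B.
Proof.
  unfold var_sum. rewrite <- (rsum_div_mod (fun k r => Cmod (psi (trisect k (S r)) - psi (trisect k r))%C) B 3) by lia.
  apply rsum_ext. intros m Hm. rewrite trisected_succ. reflexivity.
Qed.

Lemma var_sum_trisected_ge : var_sum psi a B <= var_sum psi trisected (B * 3).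
Proof.
  rewrite var_sum_trisected. unfold var_sum. apply rsum_le. intros k Hk. simpl.
  replace (psi (a (S k)) - psi (a k))%C
    with ((psi (a k + gap k) - psi (a k)) + (psi (a (S k) - gap k) - psi (a k + gap k))
          + (psi (a (S k)) - psi (a (S k) - gap k)))%C by ring.
  eapply Rle_trans. apply Cmod_triangle.
  pose proof (Cmod_triangle (psi (a k + gap k) - psi (a k)) (psi (a (S k) - gap k) - psi (a k + gap k))).
  lra.
Qed.

Lemma outer_var_small :
  rsum (fun m => outer_weight m * Cmod (psi (trisected (S m)) - psi (trisected m))%C) (B * 3) <= 2 * eps1.
Proof.
  set (f := fun k r => (if Nat.eq_dec r 1 then 0 else 1) * Cmod (psi (trisect k (S r)) - psi (trisect k r))%C).
  rewrite (rsum_ext _ (fun m => f (m / 3)%nat (m mod 3)%nat)).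
  2:{ intros m Hm. unfold f, outer_weight. rewrite trisected_succ. reflexivity. }
  rewrite rsum_div_mod by lia.
  assert (HB0: 0 < INR B) by (apply lt_0_INR, (part_length_pos _ _ Ha)).
  apply Rle_trans with (rsum (fun _ => 2 * (eps1 / INR B)) B).
  - apply rsum_le. intros k Hk. unfold f. simpl.
    pose proof (gap_bounds k Hk). pose proof (a_in k ltac:(lia)). pose proof (a_in (S k) ltac:(lia)).
    assert (C1: Cmod (psi (a k + gap k) - psi (a k))%C <= eps1 / INR B)
      by (apply Hunif; try lra; rewrite Rabs_right; lra).
    assert (C2: Cmod (psi (a (S k)) - psi (a (S k) - gap k))%C <= eps1 / INR B)
      by (apply Hunif; try lra; rewrite Rabs_right; lra).
    pose proof (Cmod_ge_0 (psi (a (S k) - gap k) - psi (a k + gap k))%C). lra.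
  - rewrite rsum_const. right. field. lra.
Qed.

Variable dm : R.
Hypothesis Hdm : 0 < dm.
Hypothesis Hdmk : forall k, (k < B)%nat -> a k < a (S k) -> dm <= gap k.

(* sin is increasing with slope >= cos 1 on [0,1], so ramps of this width in sin x
   separate points of [0,1] at distance dm/2. *)
Definition ramp_width := cos 1 * dm.

Definition polar_step (x : R) : C := staircase B cell_sign (fun k => sin (a k)) ramp_width (sin x).

Lemma ramp_width_pos : 0 < ramp_width.
Proof. unfold ramp_width. pose proof cos_1_pos. nra. Qed.

Lemma sin_a_mono k j : (1 <= k <= j)%nat -> (j < B)%nat -> sin (a k) <= sin (a j).
Proof.
  intros. apply sin_le_01. split. apply a_in; lia. apply (part_mono _ _ _ _ Ha); lia. apply a_in; lia.
Qed.

Lemma Cmod_polar_step x : Cmod (polar_step x) <= 1.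
Proof.
  apply Cmod_staircase. apply ramp_width_pos.
  intros; unfold cell_sign; rewrite Cmod_Cconj_sign; lra. apply sin_a_mono.
Qed.

Lemma polar_step_eq k x : (k < B)%nat -> a k < a (S k) ->
  a k + gap k / 2 <= x <= a (S k) - gap k / 2 -> polar_step x = cell_sign k.
Proof.
  intros Hk Hlt Hx. pose proof (Hdmk k Hk Hlt). pose proof (gap_bounds k Hk). pose proof cos_1_pos.
  pose proof (a_in k ltac:(lia)). pose proof (a_in (S k) ltac:(lia)).
  assert (Hw: ramp_width <= cos 1 * gap k) by (unfold ramp_width; apply Rmult_le_compat_l; lra).
  unfold polar_step. apply staircase_eq; auto. apply ramp_width_pos.
  - intros i Hi. assert (a i <= a k) by (apply (part_mono _ _ _ _ Ha); lia).
    pose proof (a_in i ltac:(lia)).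
    pose proof (sin_increment_lower_bound x (a k) ltac:(lra) ltac:(lra)).
    pose proof (sin_le_01 (a k) (a i) ltac:(lra) ltac:(lra)). nra.
  - intros i Hi HiB. assert (a (S k) <= a i) by (apply (part_mono _ _ _ _ Ha); lia).
    pose proof (a_in i ltac:(lia)).
    pose proof (sin_increment_lower_bound (a (S k)) x ltac:(lra) ltac:(lra)).
    pose proof (sin_le_01 (a i) (a (S k)) ltac:(lra) ltac:(lra)). nra.
Qed.

Section FinePartition.
Variables (p xi : nat -> R) (n : nat).
Hypothesis Hp : partition 0 1 p n.
Hypothesis Hmesh : forall j, (j < n)%nat -> p (S j) - p j < dm / 2.
Hypothesis Htag : forall j, (j < n)%nat -> p j <= xi j <= p (S j).

Let D := piece_incr psi trisected p.
Let u m := Cconj_sign (psi (trisected (S m)) - psi (trisected m))%C.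

(* On middle thirds polar_step is exactly aligned with the increment; elsewhere only the
   trivial bound |polar_step| <= 1 is used, at the price of the outer weight. *)
Lemma Re_polar_step_piece j m : (j < n)%nat -> (m < B * 3)%nat ->
  Re (u m * D j m)%C - 2 * outer_weight m * Cmod (D j m) <= Re (polar_step (xi j) * D j m)%C.
Proof.
  intros Hj Hm. unfold outer_weight. destruct (Nat.eq_dec (m mod 3) 1) as [E|E].
  - destruct (classic (D j m = 0%C)) as [D0|D0].
    { rewrite D0, !Cmult_0_r. simpl. lra. }
    set (k := (m / 3)%nat).
    assert (Hk: (k < B)%nat) by (apply Nat.Div0.div_lt_upper_bound; lia).
    assert (Eq1: trisected m = a k + gap k) by (unfold trisected; fold k; rewrite E; reflexivity).
    assert (Eq2: trisected (S m) = a (S k) - gap k)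
      by (rewrite trisected_succ; fold k; rewrite E; reflexivity).
    pose proof (gap_bounds k Hk). pose proof (part_mono _ _ _ _ Hp j (S j) ltac:(lia)).
    destruct (piece_incr_nonzero psi trisected p j m) as [Hq [P1 P2]]; auto.
    { apply (part_mono _ _ _ _ trisected_partition); lia. }
    rewrite Eq1, Eq2 in *.
    assert (Hlt: a k < a (S k)) by lra.
    pose proof (Hdmk k Hk Hlt). specialize (Hmesh j Hj). specialize (Htag j Hj).
    rewrite (polar_step_eq k) by (auto; lra).
    unfold u, cell_sign. rewrite Eq1, Eq2. simpl. lra.
  - pose proof (Cmod_polar_step (xi j)).
    pose proof (Re_le_Cmod (u m * D j m)%C) as H1.
    rewrite Cmod_mult in H1. unfold u in H1. rewrite Cmod_Cconj_sign in H1.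
    pose proof (re_le_Cmod (polar_step (xi j) * D j m)%C) as H2. rewrite Cmod_mult in H2.
    pose proof (Rle_abs (- Re (polar_step (xi j) * D j m)%C)) as H3. rewrite Rabs_Ropp in H3.
    pose proof (Cmod_ge_0 (D j m)). pose proof (Cmod_ge_0 (polar_step (xi j))). unfold u. nra.
Qed.

Lemma Re_polar_step_sum_ge :
  V - 7 * eps1 <= Re (Csum (fun j => polar_step (xi j) * (psi (p (S j)) - psi (p j)))%C n).
Proof.
  set (NB := (B * 3)%nat).
  set (A := fun m => rsum (fun j => Cmod (D j m)) n).
  set (dQ := fun m => Cmod (psi (trisected (S m)) - psi (trisected m))%C).
  assert (Hsplit: Csum (fun j => polar_step (xi j) * (psi (p (S j)) - psi (p j)))%C n
                  = Csum (fun m => Csum (fun j => polar_step (xi j) * D j m)%C n) NB).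
  { rewrite <- Csum_swap. apply Csum_ext. intros j Hj.
    rewrite <- (Csum_piece_incr_cells psi trisected NB trisected_partition p n j Hp Hj).
    symmetry. apply Csum_scal. }
  assert (Hcell: forall m, (m < NB)%nat ->
            dQ m - 2 * outer_weight m * A m <= Re (Csum (fun j => polar_step (xi j) * D j m)%C n)).
  { intros m Hm. rewrite Re_Csum.
    eapply Rle_trans; [| apply rsum_le; intros j Hj; apply Re_polar_step_piece; auto].
    rewrite rsum_minus, <- (Re_Csum (fun j => (u m * D j m)%C) n), Csum_scal.
    unfold D. rewrite (Csum_piece_incr_steps psi trisected NB trisected_partition p n m Hp Hm).
    unfold u. rewrite Cconj_sign_mul. simpl. unfold A, D. rewrite rsum_scal. fold (dQ m). lra. }
  assert (HdQA: forall m, (m < NB)%nat -> dQ m <= A m).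
  { intros m Hm. unfold dQ, A, D.
    rewrite <- (Csum_piece_incr_steps psi trisected NB trisected_partition p n m Hp Hm). apply Cmod_Csum. }
  assert (HA: rsum A NB <= V).
  { unfold A, D, NB. rewrite (var_sum_merge psi trisected (B * 3) trisected_partition p n Hp).
    apply HV, merge_partition; [apply trisected_partition | auto]. }
  assert (HdQ: rsum dQ NB = var_sum psi trisected NB) by reflexivity.
  assert (Hw: rsum (fun m => outer_weight m * A m) NB
              <= rsum (fun m => outer_weight m * dQ m) NB + (rsum A NB - rsum dQ NB)).
  { rewrite <- rsum_minus, <- rsum_plus. apply rsum_le. intros m Hm. pose proof (HdQA m Hm).
    assert (0 <= outer_weight m <= 1) by (unfold outer_weight; destruct Nat.eq_dec; lra). nra. }
  assert (Hout: rsum (fun m => outer_weight m * dQ m) NB <= 2 * eps1) by apply outer_var_small.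
  assert (Htri: var_sum psi a B <= var_sum psi trisected NB) by apply var_sum_trisected_ge.
  rewrite Hsplit, Re_Csum.
  eapply Rle_trans; [| apply rsum_le; intros m Hm; apply Hcell; auto].
  rewrite rsum_minus, (rsum_ext (fun m => 2 * outer_weight m * A m) (fun m => 2 * (outer_weight m * A m)))
    by (intros; ring).
  rewrite rsum_scal. lra.
Qed.

End FinePartition.

End PolarStep.

(** * Trigonometric polynomials *)

(* A trigonometric polynomial with real frequencies: the list of (coefficient, frequency). *)
Definition trig_poly := list (C * R).

Fixpoint tp_eval (l : trig_poly) (x : R) : C :=
  match l with nil => 0%C | cons (c, s) l' => (c * cis (s * x) + tp_eval l' x)%C end.

Definition tp_scal (a : C) (l : trig_poly) : trig_poly := List.map (fun cs => ((a * fst cs)%C, snd cs)) l.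
Definition tp_add (l1 l2 : trig_poly) : trig_poly := List.app l1 l2.
Definition tp_sub (l1 l2 : trig_poly) : trig_poly := List.app l1 (tp_scal (-1)%C l2).
Definition tp_mul (l1 l2 : trig_poly) : trig_poly :=
  List.flat_map (fun cs1 => List.map (fun cs2 => ((fst cs1 * fst cs2)%C, snd cs1 + snd cs2)) l2) l1.
Definition tp_const (a : C) : trig_poly := cons (a, 0) nil.
Definition tp_sin : trig_poly := cons ((- Ci / 2)%C, 1) (cons ((Ci / 2)%C, -1) nil).
Definition tp_shift (t : R) (l : trig_poly) : trig_poly := List.map (fun cs => (fst cs, snd cs + t)) l.

Fixpoint tp_sum (F : nat -> trig_poly) (m : nat) : trig_poly :=
  match m with O => nil | S m' => tp_add (tp_sum F m') (F m') end.

Lemma tp_eval_app l1 l2 x : tp_eval (List.app l1 l2) x = (tp_eval l1 x + tp_eval l2 x)%C.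
Proof. induction l1 as [|[c s] l IH]; simpl. ring. rewrite IH. ring. Qed.

Lemma tp_eval_add l1 l2 x : tp_eval (tp_add l1 l2) x = (tp_eval l1 x + tp_eval l2 x)%C.
Proof. apply tp_eval_app. Qed.

Lemma tp_eval_scal a l x : tp_eval (tp_scal a l) x = (a * tp_eval l x)%C.
Proof. induction l as [|[c s] l IH]; simpl. ring. rewrite IH. ring. Qed.

Lemma tp_eval_sub l1 l2 x : tp_eval (tp_sub l1 l2) x = (tp_eval l1 x - tp_eval l2 x)%C.
Proof. unfold tp_sub. rewrite (tp_eval_add l1), tp_eval_scal. ring. Qed.

Lemma tp_eval_mul l1 l2 x : tp_eval (tp_mul l1 l2) x = (tp_eval l1 x * tp_eval l2 x)%C.
Proof.
  assert (Hmap: forall c1 s1, tp_eval (List.map (fun cs2 => ((c1 * fst cs2)%C, s1 + snd cs2)) l2) x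
                              = (c1 * cis (s1 * x) * tp_eval l2 x)%C).
  { intros c1 s1. induction l2 as [|[c2 s2] l2 IH2]; simpl. ring. rewrite IH2.
    replace ((s1 + s2) * x) with (s1 * x + s2 * x) by ring. rewrite <- cis_add. ring. }
  induction l1 as [|[c1 s1] l IH]; simpl. ring.
  rewrite tp_eval_app, IH, Hmap. ring.
Qed.

Lemma tp_eval_const a x : tp_eval (tp_const a) x = a.
Proof. simpl. rewrite Rmult_0_l, cis_0. ring. Qed.

Lemma tp_eval_sin x : tp_eval tp_sin x = RtoC (sin x).
Proof.
  simpl. unfold cis. rewrite Rmult_1_l. replace (-1 * x) with (- x) by ring. rewrite cos_neg, sin_neg.
  unfold Ci, Cdiv, Cmult, Cplus, Copp, Cinv, RtoC; simpl. f_equal; field.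
Qed.

Lemma tp_eval_shift t l x : tp_eval (tp_shift t l) x = (tp_eval l x * cis (t * x))%C.
Proof.
  induction l as [|[c s] l IH]; simpl. ring. rewrite IH.
  replace ((s + t) * x) with (s * x + t * x) by ring. rewrite <- cis_add. ring.
Qed.

Lemma tp_eval_sum F m x : tp_eval (tp_sum F m) x = Csum (fun k => tp_eval (F k) x) m.
Proof. induction m; simpl. reflexivity. rewrite tp_eval_add, IHm. reflexivity. Qed.

(* From 0, y <- y + (u - y^2)/2 increases to sqrt u for u in [0,1]; it only uses ring
   operations, so it can be run on trigonometric polynomials. *)
Fixpoint sqrt_iter (n : nat) (u : R) : R :=
  match n with O => 0 | S n' => sqrt_iter n' u + (u - sqrt_iter n' u ^ 2) / 2 end.

Lemma pow_one_sub_mul_le b n : 0 <= b <= 1 -> (1 - b) ^ n * (1 + INR n * b) <= 1.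
Proof.
  intros Hb. induction n. simpl. lra.
  rewrite S_INR. simpl. pose proof (pow_le (1 - b) n ltac:(lra)).
  assert ((1 - b) ^ n * (1 - b) * (1 + (INR n + 1) * b) <= (1 - b) ^ n * (1 + INR n * b)).
  { rewrite Rmult_assoc. apply Rmult_le_compat_l; auto. pose proof (pos_INR n). nra. }
  lra.
Qed.

Lemma sqrt_iter_geometric u n : 0 <= u <= 1 ->
  0 <= sqrt_iter n u <= sqrt u /\ sqrt u - sqrt_iter n u <= sqrt u * (1 - sqrt u / 2) ^ n.
Proof.
  intros Hu. set (r := sqrt u). assert (Hr: 0 <= r <= 1).
  { split. apply sqrt_pos. unfold r. rewrite <- sqrt_1. apply sqrt_le_1_alt. lra. }
  assert (Hu2: u = r * r) by (unfold r; rewrite sqrt_sqrt; lra).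
  induction n.
  - simpl. lra.
  - destruct IHn as [[A1 A2] A3]. fold r in A2, A3. simpl sqrt_iter. fold r.
    set (y := sqrt_iter n u) in *. rewrite Hu2.
    assert (0 <= (1 - r / 2) ^ n) by (apply pow_le; lra).
    split. split; nra.
    replace (r - (y + (r * r - y ^ 2) / 2)) with ((r - y) * (1 - (r + y) / 2)) by field.
    apply Rle_trans with ((r - y) * (1 - r / 2)). nra.
    replace (r * (1 - r / 2) ^ S n) with (r * (1 - r / 2) ^ n * (1 - r / 2)) by (simpl; ring).
    apply Rmult_le_compat_r; lra.
Qed.

Lemma sqrt_iter_error u n : 0 <= u <= 1 -> Rabs (sqrt u - sqrt_iter n u) <= 2 / INR (S n).
Proof.
  intros Hu. destruct (sqrt_iter_geometric u n Hu) as [[A1 A2] A3]. rewrite Rabs_right by lra.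
  eapply Rle_trans. apply A3. set (r := sqrt u). assert (Hr: 0 <= r <= 1).
  { split. apply sqrt_pos. unfold r. rewrite <- sqrt_1. apply sqrt_le_1_alt. lra. }
  pose proof (pow_one_sub_mul_le (r / 2) n ltac:(lra)). pose proof (pow_le (1 - r / 2) n ltac:(lra)).
  rewrite S_INR. pose proof (pos_INR n).
  apply Rmult_le_reg_r with (INR n + 1). lra. field_simplify; try lra. nra.
Qed.

Fixpoint tp_sqrt_iter (n : nat) (v : trig_poly) : trig_poly :=
  match n with
  | O => nil
  | S n' => tp_add (tp_sqrt_iter n' v)
             (tp_scal (RtoC (1/2)) (tp_sub v (tp_mul (tp_sqrt_iter n' v) (tp_sqrt_iter n' v))))
  end.

Lemma tp_eval_sqrt_iter n v x u : tp_eval v x = RtoC u -> tp_eval (tp_sqrt_iter n v) x = RtoC (sqrt_iter n u).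
Proof.
  intros Hv. induction n; simpl. auto.
  rewrite tp_eval_add, tp_eval_scal, tp_eval_sub, tp_eval_mul, IHn, Hv.
  unfold RtoC, Cplus, Cmult, Cminus, Copp; simpl. f_equal; field.
Qed.

(* |sin x - e| = 4 sqrt(((sin x - e)/4)^2), and the square lies in [0,1] when |e| <= 3. *)
Definition tp_abs_sin_sub (e : R) (N : nat) : trig_poly :=
  let h := tp_scal (RtoC (1/4)) (tp_sub tp_sin (tp_const (RtoC e))) in
  tp_scal (RtoC 4) (tp_sqrt_iter N (tp_mul h h)).

Lemma tp_abs_sin_sub_error e N x : Rabs e <= 3 ->
  Cmod (tp_eval (tp_abs_sin_sub e N) x - RtoC (Rabs (sin x - e)))%C <= 8 / INR (S N).
Proof.
  intros He. unfold tp_abs_sin_sub. set (a := (sin x - e) / 4).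
  rewrite tp_eval_scal, (tp_eval_sqrt_iter N _ x (a * a)).
  2:{ rewrite tp_eval_mul, !tp_eval_scal, tp_eval_sub, tp_eval_sin, tp_eval_const. unfold a.
      unfold RtoC, Cmult, Cminus, Cplus, Copp; simpl. f_equal; field. }
  assert (Hu: 0 <= a * a <= 1).
  { pose proof (SIN_bound x). assert (Rabs a <= 1).
    { unfold a. unfold Rabs in *. repeat destruct Rcase_abs; lra. }
    pose proof (Rabs_pos a). pose proof (Rsqr_abs a). unfold Rsqr in *. nra. }
  assert (Hs: Rabs (sin x - e) = 4 * sqrt (a * a)).
  { change (a * a) with (Rsqr a). rewrite sqrt_Rsqr_abs. unfold a, Rdiv.
    rewrite Rabs_mult, (Rabs_right (/4)) by lra. field. }
  rewrite Hs. replace (RtoC 4 * RtoC (sqrt_iter N (a * a)) - RtoC (4 * sqrt (a * a)))%C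
    with (RtoC (4 * (sqrt_iter N (a * a) - sqrt (a * a))))
    by (unfold RtoC, Cmult, Cminus, Cplus, Copp; simpl; f_equal; ring).
  rewrite Cmod_R, Rabs_mult, Rabs_right, Rabs_minus_sym by lra.
  pose proof (sqrt_iter_error (a * a) N Hu). lra.
Qed.

Lemma ramp_abs w v : 0 < w -> ramp w v = (Rabs (v + w / 2) - Rabs (v - w / 2)) / (2 * w) + 1 / 2.
Proof.
  intros Hw. unfold ramp. set (t := v / w).
  assert (Ev: v = t * w) by (unfold t; field; lra). rewrite Ev.
  replace (t * w + w / 2) with ((t + 1/2) * w) by field.
  replace (t * w - w / 2) with ((t - 1/2) * w) by field.
  rewrite !Rabs_mult, (Rabs_right w) by lra.
  replace ((Rabs (t + 1 / 2) * w - Rabs (t - 1 / 2) * w) / (2 * w))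
    with ((Rabs (t + 1 / 2) - Rabs (t - 1 / 2)) / 2) by (field; lra).
  replace (t * w / w) with t by (field; lra).
  unfold Rabs, Rmax, Rmin. repeat destruct Rcase_abs; repeat destruct Rle_dec; lra.
Qed.

Definition tp_ramp_sin (w c : R) (N : nat) : trig_poly :=
  tp_add (tp_scal (RtoC (1 / (2 * w))) (tp_sub (tp_abs_sin_sub (c - w / 2) N) (tp_abs_sin_sub (c + w / 2) N)))
         (tp_const (RtoC (1/2))).

Lemma tp_ramp_sin_error w c N x : 0 < w -> w <= 2 -> Rabs c <= 1 ->
  Cmod (tp_eval (tp_ramp_sin w c N) x - RtoC (ramp w (sin x - c)))%C <= 8 / (w * INR (S N)).
Proof.
  intros Hw Hw2 Hc. unfold tp_ramp_sin. rewrite tp_eval_add, tp_eval_scal, tp_eval_sub, tp_eval_const.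
  rewrite ramp_abs by auto.
  set (h1 := tp_eval (tp_abs_sin_sub (c - w / 2) N) x). set (h2 := tp_eval (tp_abs_sin_sub (c + w / 2) N) x).
  assert (Hc': - 1 <= c <= 1) by (unfold Rabs in Hc; destruct Rcase_abs; lra).
  assert (E1: Cmod (h1 - RtoC (Rabs (sin x - (c - w / 2))))%C <= 8 / INR (S N))
    by (apply tp_abs_sin_sub_error; apply Rabs_le; lra).
  assert (E2: Cmod (h2 - RtoC (Rabs (sin x - (c + w / 2))))%C <= 8 / INR (S N))
    by (apply tp_abs_sin_sub_error; apply Rabs_le; lra).
  replace (sin x - c + w / 2) with (sin x - (c - w / 2)) by ring.
  replace (sin x - c - w / 2) with (sin x - (c + w / 2)) by ring.
  set (A1 := Rabs (sin x - (c - w / 2))) in *. set (A2 := Rabs (sin x - (c + w / 2))) in *.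
  replace (RtoC (1 / (2 * w)) * (h1 - h2) + RtoC (1 / 2) - RtoC ((A1 - A2) / (2 * w) + 1 / 2))%C
    with (RtoC (1 / (2 * w)) * ((h1 - RtoC A1) - (h2 - RtoC A2)))%C
    by (unfold RtoC, Cmult, Cminus, Cplus, Copp; simpl; f_equal; field; lra).
  assert (Hpos: 0 < 1 / (2 * w)) by (apply Rdiv_lt_0_compat; lra).
  rewrite Cmod_mult, Cmod_R, Rabs_right by lra.
  assert (Cmod ((h1 - RtoC A1) - (h2 - RtoC A2))%C <= 16 / INR (S N)).
  { unfold Cminus at 1. eapply Rle_trans. apply Cmod_triangle. rewrite Cmod_opp. unfold Rdiv in *. lra. }
  assert (0 < INR (S N)) by (apply lt_0_INR; lia).
  apply Rle_trans with (1 / (2 * w) * (16 / INR (S N))).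
  apply Rmult_le_compat_l; lra. right. field. lra.
Qed.

Section StaircaseApprox.
Variables (B : nat) (sg : nat -> C) (c : nat -> R) (w : R) (N : nat).
Hypothesis Hw : 0 < w.
Hypothesis Hw2 : w <= 2.
Hypothesis Hc : forall k, Rabs (c k) <= 1.
Hypothesis Hsg : forall k, Cmod (sg k) <= 1.

Definition tp_level (k : nat) : trig_poly :=
  if Nat.eq_dec k 0 then tp_const 1%C else if Compare_dec.lt_dec k B then tp_ramp_sin w (c k) N else nil.

Definition tp_staircase : trig_poly :=
  tp_sum (fun k => tp_scal (sg k) (tp_sub (tp_level k) (tp_level (S k)))) B.

Lemma tp_level_error k x :
  Cmod (tp_eval (tp_level k) x - RtoC (level B c w k (sin x)))%C <= 8 / (w * INR (S N)).
Proof.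
  assert (0 < INR (S N)) by (apply lt_0_INR; lia).
  assert (0 <= 8 / (w * INR (S N))) by (left; apply Rdiv_lt_0_compat; [lra| apply Rmult_lt_0_compat; lra]).
  unfold tp_level, level. destruct Nat.eq_dec.
  - rewrite tp_eval_const. replace (1 - RtoC 1)%C with (RtoC 0) by (unfold RtoC; apply injective_projections; simpl; ring).
    rewrite Cmod_0. auto.
  - destruct Compare_dec.lt_dec. apply tp_ramp_sin_error; auto.
    simpl. replace (0 - RtoC 0)%C with (RtoC 0) by ring. rewrite Cmod_0. auto.
Qed.

Lemma tp_staircase_error x :
  Cmod (tp_eval tp_staircase x - staircase B sg c w (sin x))%C <= INR B * (16 / (w * INR (S N))).
Proof.
  unfold tp_staircase, staircase. rewrite tp_eval_sum, <- Csum_minus.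
  eapply Rle_trans. apply Cmod_Csum. rewrite <- rsum_const. apply rsum_le. intros k _.
  rewrite tp_eval_scal, tp_eval_sub, RtoC_minus.
  replace (sg k * (tp_eval (tp_level k) x - tp_eval (tp_level (S k)) x)
           - sg k * (RtoC (level B c w k (sin x)) - RtoC (level B c w (S k) (sin x))))%C
    with (sg k * ((tp_eval (tp_level k) x - RtoC (level B c w k (sin x)))
                  - (tp_eval (tp_level (S k)) x - RtoC (level B c w (S k) (sin x)))))%C by ring.
  rewrite Cmod_mult. pose proof (tp_level_error k x). pose proof (tp_level_error (S k) x).
  set (e := (_ - _ - _)%C).
  assert (Cmod e <= 16 / (w * INR (S N))).
  { unfold e, Cminus at 1. eapply Rle_trans. apply Cmod_triangle. rewrite Cmod_opp. unfold Rdiv in *. lra. }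
  pose proof (Hsg k). pose proof (Cmod_ge_0 (sg k)). pose proof (Cmod_ge_0 e). nra.
Qed.

End StaircaseApprox.

(** * Decay at negative frequencies *)

Definition tp_coef_norm (l : trig_poly) : R := List.fold_right (fun cs acc => Cmod (fst cs) + acc) 0 l.

Definition tp_freq_bound (l : trig_poly) : R := List.fold_right (fun cs acc => Rabs (snd cs) + acc) 0 l.

Lemma tp_coef_norm_shift t l : tp_coef_norm (tp_shift t l) = tp_coef_norm l.
Proof. induction l as [|[c s] l IH]; simpl; auto. rewrite IH. auto. Qed.

Lemma tp_coef_norm_nonneg l : 0 <= tp_coef_norm l.
Proof. induction l as [|[c s] l IH]; simpl. lra. pose proof (Cmod_ge_0 c). lra. Qed.

Lemma tp_freq_bound_nonneg l : 0 <= tp_freq_bound l.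
Proof. induction l as [|[c s] l IH]; simpl. lra. pose proof (Rabs_pos s). lra. Qed.

Lemma tp_shift_freq_ge t l cs : List.In cs (tp_shift t l) -> t - tp_freq_bound l <= snd cs.
Proof.
  induction l as [|[c s] l IH]; simpl. tauto. intros [<-|Hin]; simpl.
  - pose proof (tp_freq_bound_nonneg l). pose proof (Rle_abs (- s)). rewrite Rabs_Ropp in H0. lra.
  - specialize (IH Hin). pose proof (Rabs_pos s). lra.
Qed.

Lemma Cmod_Csum_tp_eval_le l (xi : nat -> R) (D : nat -> C) n M :
  0 <= M -> (forall cs, List.In cs l -> Cmod (Csum (fun k => cis (snd cs * xi k) * D k)%C n) <= M) ->
  Cmod (Csum (fun k => tp_eval l (xi k) * D k)%C n) <= tp_coef_norm l * M.
Proof.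
  intros HM. induction l as [|[c s] l IH]; simpl; intros H.
  - rewrite (Csum_ext _ (fun _ => 0%C)), Csum_zero, Cmod_0 by (intros; ring). lra.
  - rewrite (Csum_ext _ (fun k => c * (cis (s * xi k) * D k) + tp_eval l (xi k) * D k)%C) by (intros; ring).
    rewrite Csum_plus, Csum_scal. eapply Rle_trans. apply Cmod_triangle. rewrite Cmod_mult.
    specialize (IH (fun cs Hcs => H cs (or_intror Hcs))). specialize (H (c, s) (or_introl eq_refl)).
    simpl in H. pose proof (Cmod_ge_0 c). nra.
Qed.

Lemma Rabs_Im_le_of_Cmod (z : C) (a k : R) : Cmod z <= a -> 0 < k -> Rabs (Im z) <= k * a + (a - Re z) / k.
Proof.
  intros Ha Hk. pose proof (Re_le_Cmod z). pose proof (Cmod_ge_0 z).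
  pose proof (Cmod2_alt z). set (x := Re z) in *. set (y := Im z) in *. set (m := Cmod z) in *.
  assert (Hy2: y * y <= 2 * a * (a - x)) by (simpl in H1; nra).
  set (b := a - x). assert (0 <= b) by (unfold b; lra).
  assert (2 * a * b <= (k * a + b / k) * (k * a + b / k)).
  { replace ((k * a + b / k) * (k * a + b / k)) with (k * a * (k * a) + 2 * a * b + (b / k) * (b / k))
      by (field; lra). nra. }
  assert (0 <= k * a + b / k) by (assert (0 <= b / k) by (apply Rdiv_le_0_compat; lra); nra).
  apply Rle_trans with (Rabs (k * a + b / k)).
  apply Rsqr_le_abs_0. unfold Rsqr. unfold b in *. lra. rewrite Rabs_right; lra.
Qed.

(* The defect splits as (1 - |f|^2) e D + conj f e (f D - conj (f D)); the first part is
   controlled by |D| - Re (f D), the second by the imaginary part of f D. *)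
Lemma Cmod_align_defect (f e D : C) (k : R) : Cmod f <= 1 -> Cmod e = 1 -> 0 < k ->
  Cmod (e * D - Cconj f * e * Cconj (f * D))%C
  <= 2 * (Cmod D - Re (f * D)%C) * (1 + / k) + 2 * k * Cmod D.
Proof.
  intros Hf He Hk. set (z := (f * D)%C). set (a := Cmod D).
  assert (Ez: Cmod z = Cmod f * a) by (unfold z, a; apply Cmod_mult).
  replace (e * D - Cconj f * e * Cconj z)%C with ((1 - f * Cconj f) * e * D + Cconj f * e * (z - Cconj z))%C
    by (unfold z; ring).
  eapply Rle_trans. apply Cmod_triangle. rewrite !Cmod_mult, He, Cmod_conj, <- Cmod2_conj.
  replace (1 - RtoC (Cmod f ^ 2))%C with (RtoC (1 - Cmod f ^ 2))
    by (unfold RtoC, Cminus, Cplus, Copp; apply injective_projections; simpl; ring).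
  rewrite Cmod_R. pose proof (Cmod_ge_0 f). rewrite Rabs_right by nra.
  assert (Eim: Cmod (z - Cconj z)%C = 2 * Rabs (Im z)).
  { replace (z - Cconj z)%C with (Ci * RtoC (2 * Im z))%C.
    rewrite Cmod_mult, Cmod_Ci, Cmod_R, Rabs_mult, Rabs_right by lra. ring.
    destruct z as [zx zy]. unfold Ci, RtoC, Cmult, Cconj, Cminus, Cplus, Copp; simpl.
    apply injective_projections; simpl; ring. }
  rewrite Eim. assert (Ha: 0 <= a) by apply Cmod_ge_0.
  pose proof (Rabs_Im_le_of_Cmod z a k ltac:(rewrite Ez; nra) Hk).
  pose proof (Re_le_Cmod z). rewrite Ez in H1.
  assert (T1: (1 - Cmod f ^ 2) * a <= 2 * (a - Re z)).
  { assert (0 <= (1 - Cmod f) * (1 - Cmod f) * a) by (apply Rmult_le_pos; [nra|lra]).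
    assert ((1 - Cmod f ^ 2) * a = 2 * (a - Cmod f * a) - (1 - Cmod f) * (1 - Cmod f) * a) by ring. lra. }
  assert (T2: Cmod f * (2 * Rabs (Im z)) <= 2 * (k * a + (a - Re z) / k))
    by (pose proof (Rabs_pos (Im z)); nra).
  assert (0 <= a - Re z) by nra.
  assert (E3: 2 * (k * a + (a - Re z) / k) = 2 * k * a + 2 * (a - Re z) * / k) by (field; lra).
  assert (0 <= 2 * (a - Re z) * / k) by (apply Rmult_le_pos; [lra | left; apply Rinv_0_lt_compat; lra]).
  fold a. nra.
Qed.

Lemma Cmod_Csum_align_defect (f e D : nat -> C) n (k : R) :
  (forall j, Cmod (f j) <= 1) -> (forall j, Cmod (e j) = 1) -> 0 < k ->
  Cmod (Csum (fun j => e j * D j)%C n - Cconj (Csum (fun j => f j * f j * Cconj (e j) * D j)%C n))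
  <= 2 * (rsum (fun j => Cmod (D j)) n - Re (Csum (fun j => f j * D j)%C n)) * (1 + / k)
     + 2 * k * rsum (fun j => Cmod (D j)) n.
Proof.
  intros Hf He Hk. rewrite Cconj_Csum, <- Csum_minus.
  eapply Rle_trans. apply Cmod_Csum.
  rewrite Re_Csum, <- rsum_minus, <- !rsum_scal, (Rmult_comm _ (1 + / k)), <- rsum_scal, <- rsum_plus.
  apply rsum_le. intros j _.
  replace (Cconj (f j * f j * Cconj (e j) * D j))%C with (Cconj (f j) * e j * Cconj (f j * D j))%C
    by (rewrite !Cmult_conj, Cconj_conj; ring).
  pose proof (Cmod_align_defect (f j) (e j) (D j) k (Hf j) (He j) Hk). lra.
Qed.

Lemma Re_Csum_perturb (f g : nat -> C) (D : nat -> C) n eta :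
  (forall j, (j < n)%nat -> Cmod (f j - g j)%C <= eta) ->
  Re (Csum (fun j => g j * D j)%C n) - eta * rsum (fun j => Cmod (D j)) n
  <= Re (Csum (fun j => f j * D j)%C n).
Proof.
  intros H. rewrite !Re_Csum, <- rsum_scal, <- rsum_minus. apply rsum_le. intros j Hj.
  pose proof (Re_le_Cmod ((g j - f j) * D j)%C). rewrite Cmod_mult, <- Cmod_opp in H0.
  replace (- (g j - f j))%C with (f j - g j)%C in H0 by ring.
  pose proof (H j Hj). pose proof (Cmod_ge_0 (D j)).
  replace (Re ((g j - f j) * D j)%C) with (Re (g j * D j)%C - Re (f j * D j)%C) in H0
    by (unfold Cminus, Cmult, Cplus, Copp; simpl; ring).
  nra.
Qed.

Lemma Cmod_normalize_approx (z g : C) eta : 0 < eta -> Cmod g <= 1 -> Cmod (z - g)%C <= eta ->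
  Cmod (RtoC (/ (1 + eta)) * z)%C <= 1 /\ Cmod (RtoC (/ (1 + eta)) * z - g)%C <= 2 * eta.
Proof.
  intros Heta Hg Hz. assert (Hinv: 0 < / (1 + eta)) by (apply Rinv_0_lt_compat; lra).
  assert (Hinv1: / (1 + eta) <= 1) by (rewrite <- Rinv_1; apply Rinv_le_contravar; lra).
  assert (Cmod z <= 1 + eta).
  { replace z with ((z - g) + g)%C by ring. eapply Rle_trans. apply Cmod_triangle. lra. }
  split.
  - rewrite Cmod_mult, Cmod_R, Rabs_right by lra.
    apply Rmult_le_reg_l with (1 + eta). lra. field_simplify; lra.
  - replace (RtoC (/ (1 + eta)) * z - g)%C
      with (RtoC (/ (1 + eta)) * (z - g) - RtoC (eta / (1 + eta)) * g)%C
      by (unfold RtoC, Cmult, Cminus, Cplus, Copp; apply injective_projections; simpl; field; lra).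
    unfold Cminus at 1. eapply Rle_trans. apply Cmod_triangle.
    rewrite Cmod_opp, !Cmod_mult, !Cmod_R, !Rabs_right by (apply Rle_ge; try apply Rdiv_le_0_compat; lra).
    assert (eta / (1 + eta) <= eta) by (unfold Rdiv; nra).
    assert (0 <= eta / (1 + eta)) by (apply Rdiv_le_0_compat; lra).
    pose proof (Cmod_ge_0 g). pose proof (Cmod_ge_0 (z - g)%C). nra.
Qed.

Section Polar.
Variable psi : R -> C.
Hypothesis Hc : cont_on01 psi.
Variable V : R.
Hypothesis HV0 : 0 <= V.
Hypothesis HV : forall p n, partition 0 1 p n -> var_sum psi p n <= V.
Hypothesis Hopt : forall eps, 0 < eps -> exists p n, partition 0 1 p n /\ V - eps < var_sum psi p n.

Definition aligns (G : R -> C) (e d0 : R) : Prop :=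
  forall p xi n, partition 0 1 p n -> (forall j, (j < n)%nat -> p (S j) - p j < d0) ->
    (forall j, (j < n)%nat -> p j <= xi j <= p (S j)) ->
    V - e <= Re (Csum (fun j => G (xi j) * (psi (p (S j)) - psi (p j)))%C n).

Lemma staircase_aligns e : 0 < e ->
  exists B sg c w d0, 0 < w <= 2 /\ 0 < d0 /\ (forall k, Rabs (c k) <= 1) /\ (forall k, Cmod (sg k) <= 1) /\
    (forall x, Cmod (staircase B sg c w (sin x)) <= 1) /\
    aligns (fun x => staircase B sg c w (sin x)) e d0.
Proof.
  intros He. set (eps1 := e / 7). assert (He1: 0 < eps1) by (unfold eps1; lra).
  destruct (Hopt eps1 He1) as [a [B [Ha Hnear]]].
  assert (HBr: 0 < INR B) by (apply lt_0_INR, (part_length_pos _ _ Ha)).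
  destruct (cont_on01_uniform psi Hc (eps1 / INR B) ltac:(apply Rdiv_lt_0_compat; lra)) as [du [Hdu Hu]].
  set (tau := du / 2). assert (Htau: 0 < tau) by (unfold tau; lra).
  assert (Hunif: forall x y, 0 <= x <= 1 -> 0 <= y <= 1 -> Rabs (x - y) <= tau ->
                   Cmod (psi x - psi y)%C <= eps1 / INR B)
    by (intros x y Hx Hy Hxy; left; apply Hu; auto; unfold tau in Hxy; lra).
  destruct (finite_pos_lower_bound (fun k => a k < a (S k)) (gap a tau) B) as [dm0 [Hdm0 Hdmk0]].
  { intros k Hk Hlt. unfold gap. apply Rmin_pos; lra. }
  set (dm := Rmin dm0 1). assert (Hdm: 0 < dm) by (unfold dm; apply Rmin_pos; lra).
  assert (Hdmk: forall k, (k < B)%nat -> a k < a (S k) -> dm <= gap a tau k)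
    by (intros; eapply Rle_trans; [apply Rmin_l | apply Hdmk0; auto]).
  exists B, (cell_sign psi a tau), (fun k => sin (a k)), (ramp_width dm), (dm / 2).
  split; [|split; [|split; [|split; [|split]]]].
  - split. apply ramp_width_pos; auto.
    unfold ramp_width. pose proof (COS_bound 1). pose proof cos_1_pos.
    assert (dm <= 1) by apply Rmin_r. nra.
  - lra.
  - intros k. apply Rabs_le, SIN_bound.
  - intros k. unfold cell_sign. rewrite Cmod_Cconj_sign. lra.
  - intros x. apply (Cmod_polar_step psi a B Ha tau dm Hdm).
  - intros p xi n Hp Hmesh Htag.
    pose proof (Re_polar_step_sum_ge psi V HV a B Ha eps1 tau Htau Hunif Hnear dm Hdm Hdmk p xi n Hp Hmesh Htag).
    unfold polar_step in H. unfold eps1 in H. lra.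
Qed.

Lemma trig_poly_aligns e : 0 < e ->
  exists (phi : trig_poly) d0, 0 < d0 /\ (forall x, Cmod (tp_eval phi x) <= 1) /\ aligns (tp_eval phi) e d0.
Proof.
  intros He. set (eta := e / (4 * (V + 1))). assert (Heta: 0 < eta) by (unfold eta; apply Rdiv_lt_0_compat; lra).
  destruct (staircase_aligns (e / 2) ltac:(lra)) as [B [sg [c [w [d0 [Hw [Hd0 [Hcb [Hsg [HG HGal]]]]]]]]]].
  destruct (INR_unbounded (INR B * 16 / (w * eta))) as [N HN].
  set (P := tp_staircase B sg c w N).
  assert (HP: forall x, Cmod (tp_eval P x - staircase B sg c w (sin x))%C <= eta).
  { intros x. eapply Rle_trans. apply tp_staircase_error; auto; lra.
    assert (HS: 0 < INR (S N)) by (apply lt_0_INR; lia).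
    assert (0 <= eta / INR (S N)) by (apply Rdiv_le_0_compat; lra).
    replace (INR B * (16 / (w * INR (S N)))) with ((INR B * 16 / (w * eta)) * (eta / INR (S N))) by (field; lra).
    apply Rle_trans with (INR (S N) * (eta / INR (S N))).
    - apply Rmult_le_compat_r; auto. left. eapply Rlt_le_trans. apply HN. apply le_INR; lia.
    - right; field; lra. }
  exists (tp_scal (RtoC (/ (1 + eta))) P), d0. split; [|split]; auto.
  - intros x. rewrite tp_eval_scal. apply (Cmod_normalize_approx _ _ eta Heta (HG x) (HP x)).
  - intros p xi n Hp Hmesh Htag.
    pose proof (HGal p xi n Hp Hmesh Htag) as HGsum.
    assert (Hclose: forall j, (j < n)%nat ->
              Cmod (tp_eval (tp_scal (RtoC (/ (1 + eta))) P) (xi j) - staircase B sg c w (sin (xi j)))%C <= 2 * eta)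
      by (intros j _; rewrite tp_eval_scal; apply (Cmod_normalize_approx _ _ eta Heta (HG _) (HP _))).
    pose proof (Re_Csum_perturb _ _ (fun j => psi (p (S j)) - psi (p j))%C n (2 * eta) Hclose) as Hpert.
    assert (Hvar: var_sum psi p n <= V) by (apply HV, Hp).
    pose proof (var_sum_nonneg psi p n).
    assert (2 * eta * V <= e / 2).
    { unfold eta. apply Rmult_le_reg_r with (4 * (V + 1) / e). apply Rdiv_lt_0_compat; lra.
      field_simplify; lra. }
    unfold var_sum in *. nra.
Qed.

End Polar.

Section NegativeFrequencies.
Variable psi : R -> C.
Hypothesis Hc : cont_on01 psi.
Hypothesis H0 : psi 0 = 0%C.
Hypothesis H1 : psi 1 = 0%C.

Lemma RSsum_cis_uniform (l : trig_poly) e : 0 < e ->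
  exists N0, forall N, (N0 <= N)%nat -> (0 < N)%nat -> forall cs, List.In cs l ->
    Cmod (RSsum (fun x => cis (snd cs * x)) psi N - Psi psi (snd cs))%C < e.
Proof.
  intros He. induction l as [|cs l IH].
  - exists 0%nat. intros N _ _ cs [].
  - destruct IH as [N1 HN1].
    destruct (is_RS_integral_upart _ _ _ (is_RS_integral_Psi psi Hc H0 H1 (snd cs)) e He) as [N2 HN2].
    exists (N1 + N2)%nat. intros N HN HN0 cs' [<-|Hin].
    + apply HN2; auto. lia.
    + apply HN1; auto. lia.
Qed.

Lemma tp_RSsum_small (l : trig_poly) eps2 T1 : 0 < eps2 ->
  (forall s, T1 < s -> Cmod (Psi psi s) < eps2) -> (forall cs, List.In cs l -> T1 < snd cs) ->
  exists N0, forall N, (N0 <= N)%nat -> (0 < N)%nat ->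
    Cmod (Csum (fun k => tp_eval l (upart N k) * (psi (upart N (S k)) - psi (upart N k)))%C N)
    <= tp_coef_norm l * (2 * eps2).
Proof.
  intros He2 HT1 Hl. destruct (RSsum_cis_uniform l eps2 He2) as [N0 HN0].
  exists N0. intros N HN HNpos. apply Cmod_Csum_tp_eval_le. lra.
  intros cs Hcs. specialize (HN0 N HN HNpos cs Hcs). specialize (HT1 (snd cs) (Hl cs Hcs)).
  change (Csum _ N) with (RSsum (fun x => cis (snd cs * x)) psi N).
  replace (RSsum (fun x => cis (snd cs * x)) psi N)
    with ((RSsum (fun x => cis (snd cs * x)) psi N - Psi psi (snd cs)) + Psi psi (snd cs))%C by ring.
  eapply Rle_trans. apply Cmod_triangle. lra.
Qed.

(* e^{-itx} dpsi is close to the conjugate of phi^2 e^{itx} dpsi, whose frequencies exceed T1. *)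
Lemma Cmod_Psi_neg_lt V phi d0 e3 k eps2 T1 :
  (forall p n, partition 0 1 p n -> var_sum psi p n <= V) ->
  (forall x, Cmod (tp_eval phi x) <= 1) -> aligns psi V (tp_eval phi) e3 d0 ->
  0 < d0 -> 0 < k -> 0 < eps2 -> (forall s, T1 < s -> Cmod (Psi psi s) < eps2) ->
  forall t, T1 + tp_freq_bound (tp_mul phi phi) < t ->
  Cmod (Psi psi (- t)) < eps2 + (2 * e3 * (1 + / k) + 2 * k * V) + tp_coef_norm (tp_mul phi phi) * (2 * eps2).
Proof.
  intros HV Hphi1 Hal Hd0 Hk He2 HT1 t Ht. set (l := tp_mul phi phi) in *.
  destruct (tp_RSsum_small (tp_shift t l) eps2 T1 He2 HT1) as [N1 HN1].
  { intros cs Hcs. pose proof (tp_shift_freq_ge t l cs Hcs). lra. }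
  destruct (is_RS_integral_upart _ _ _ (is_RS_integral_Psi psi Hc H0 H1 (- t)) eps2 He2) as [N2 HN2].
  destruct (eventually_inv_INR_lt d0 Hd0) as [N3 HN3].
  set (N := S (N1 + N2 + N3)). assert (HN0: (0 < N)%nat) by (unfold N; lia).
  specialize (HN1 N ltac:(unfold N; lia) HN0). specialize (HN2 N ltac:(unfold N; lia) HN0).
  specialize (HN3 N ltac:(unfold N; lia) HN0).
  set (p := upart N). assert (Hp: partition 0 1 p N) by (apply upart_partition; auto).
  set (D := fun j => (psi (p (S j)) - psi (p j))%C).
  assert (Hdefect := Cmod_Csum_align_defect (fun j => tp_eval phi (p j)) (fun j => cis (- t * p j)) D N k
                       (fun j => Hphi1 (p j)) (fun j => Cmod_cis _) Hk).
  rewrite (Csum_ext (fun j => _ * _ * Cconj _ * D j)%C (fun j => tp_eval (tp_shift t l) (p j) * D j)%C)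
    in Hdefect.
  2:{ intros j _. unfold l. rewrite tp_eval_shift, tp_eval_mul, cis_conj.
      replace (- (- t * p j)) with (t * p j) by ring. ring. }
  assert (Hal' : V - e3 <= Re (Csum (fun j => tp_eval phi (p j) * D j)%C N)).
  { apply Hal; auto; intros j Hj; unfold p; pose proof (upart_step N j HN0);
      assert (0 < / INR N) by (apply Rinv_0_lt_compat, lt_0_INR; auto); lra. }
  assert (Hvar: rsum (fun j => Cmod (D j)) N <= V) by apply (HV p N Hp).
  assert (Hvar0: 0 <= rsum (fun j => Cmod (D j)) N) by apply (var_sum_nonneg psi p N).
  set (S0 := Csum (fun j => cis (- t * p j) * D j)%C N) in *.
  set (X := Csum (fun j => tp_eval (tp_shift t l) (p j) * D j)%C N) in *.
  change (RSsum (fun x => cis (- t * x)) psi N) with S0 in HN2.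
  assert (HX: Cmod X <= tp_coef_norm l * (2 * eps2)) by (rewrite <- (tp_coef_norm_shift t l); exact HN1).
  replace (Psi psi (- t)) with (- (S0 - Psi psi (- t)) + (S0 - Cconj X) + Cconj X)%C by ring.
  eapply Rle_lt_trans. apply Cmod_triangle. rewrite Cmod_conj.
  eapply Rle_lt_trans. apply Rplus_le_compat_r. apply Cmod_triangle. rewrite Cmod_opp.
  assert (0 <= 1 + / k) by (pose proof (Rinv_0_lt_compat k Hk); lra).
  nra.
Qed.

Hypothesis Hbv : bounded_variation01 psi.
Hypothesis Hpos : forall eps, 0 < eps -> exists T, forall t, T < t -> Cmod (Psi psi t) < eps.

Lemma Psi_decay_neg : forall eps, 0 < eps -> exists T, forall t, T < t -> Cmod (Psi psi (- t)) < eps.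
Proof.
  intros eps He.
  destruct (total_variation_sup psi Hbv) as [V [HV0 [HV Hopt]]].
  set (k := eps / (8 * (V + 1) + 8 * eps)).
  assert (Hk: 0 < k) by (unfold k; apply Rdiv_lt_0_compat; lra).
  assert (HkV: k * V <= eps / 8).
  { unfold k. apply Rmult_le_reg_r with ((8 * (V + 1) + 8 * eps)). lra. field_simplify; nra. }
  assert (Hk1: k <= 1 / 8).
  { unfold k. apply Rmult_le_reg_r with ((8 * (V + 1) + 8 * eps)). lra. field_simplify; nra. }
  set (e3 := k * eps / 16). assert (He3: 0 < e3) by (unfold e3; nra).
  destruct (trig_poly_aligns psi Hc V HV0 HV Hopt e3 He3) as [phi [d0 [Hd0 [Hphi1 Hal]]]].
  set (C0 := tp_coef_norm (tp_mul phi phi)). assert (HC0: 0 <= C0) by apply tp_coef_norm_nonneg.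
  set (eps2 := eps / (16 * (C0 + 1))). assert (He2: 0 < eps2) by (unfold eps2; apply Rdiv_lt_0_compat; lra).
  destruct (Hpos eps2 He2) as [T1 HT1].
  exists (T1 + tp_freq_bound (tp_mul phi phi)). intros t Ht.
  eapply Rlt_le_trans. apply (Cmod_Psi_neg_lt V phi d0 e3 k eps2 T1); auto.
  assert (E2: 2 * e3 * (1 + / k) = k * eps / 8 + eps / 8) by (unfold e3; field; lra).
  assert (E3: C0 * (2 * eps2) <= eps / 8).
  { unfold eps2. apply Rmult_le_reg_r with (8 * (C0 + 1)). lra. field_simplify; nra. }
  assert (eps2 <= eps / 16) by (unfold eps2; apply Rmult_le_compat_l; [lra | apply Rinv_le_contravar; lra]).
  fold C0. nra.
Qed.

End NegativeFrequencies.

Theorem theorem2 (psi : R -> C) :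
  cont_on01 psi ->
  bounded_variation01 psi ->
  psi 0 = 0%C -> psi 1 = 0%C ->
  ex_RInt_gen (fun x => (Cmod (psi x) / x) ^ 2) (at_right 0) (at_point 1) ->
  (forall m : nat, (m <= 2)%nat ->
     ex_RInt_gen (fun t => Cmod (RtoC (t ^ m) * Cderive_n m (hatpsi psi) t)%C)
       (at_point 1) (Rbar_locally p_infty)) ->
  (forall m : nat, (1 <= m <= 2)%nat ->
     is_lim (fun t => Cmod (RtoC (t ^ m) * Cderive_n (pred m) (hatpsi psi) t)%C)
       p_infty 0) ->
  (forall t : R, exists I : C, is_RS_integral (fun x => cis (t * x)) psi 0 1 I) /\
  (forall eps, 0 < eps -> exists T : R, forall (t : R) (I : C),
     T < Rabs t -> is_RS_integral (fun x => cis (t * x)) psi 0 1 I -> Cmod I < eps).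
Proof.
  intros Hc Hbv H0 H1 _ _ Hii.
  split.
  { intros t. exists (Psi psi t). apply is_RS_integral_Psi; auto. }
  intros eps He.
  pose proof (Psi_decay_pos psi Hc (Hii 1%nat ltac:(lia))) as Hpos.
  destruct (Hpos eps He) as [T0 HT0].
  destruct (Psi_decay_neg psi Hc H0 H1 Hbv Hpos eps He) as [T1 HT1].
  exists (Rmax T0 T1). intros t I Ht HI.
  rewrite (is_RS_integral_unique _ _ _ _ HI (is_RS_integral_Psi psi Hc H0 H1 t)).
  destruct (Rlt_or_le 0 t) as [tpos | tneg].
  - rewrite Rabs_right in Ht by lra. apply HT0. eapply Rle_lt_trans; [apply Rmax_l | exact Ht].
  - rewrite Rabs_left1 in Ht by lra. replace t with (- - t) by ring.
    apply HT1. eapply Rle_lt_trans; [apply Rmax_r | exact Ht].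
Qed.
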